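(* Let $P$ be a program over a propositional signature $\Sigma$ and $q\in\Sigma$. If $\langle P,\{q\}\rangle$ does not satisfy criterion $\Omega$, then for every program $R$ over $\Sigma$ with $q\notin\Sigma(R)$ we have $AS(f_{SP}(P,q)\cup R)=\{Y\setminus\{q\}: Y\in AS(P\cup R)\}$.
   Context: A program over $\Sigma$ is a finite set of rules $r$ of the form $a_1\vee\dots\vee a_k\leftarrow b_1,\dots,b_l,\ not\,c_1,\dots,not\,c_m,\ not\,not\,d_1,\dots,not\,not\,d_n$ with atoms in $\Sigma$; write $H(r)=\{a_i\}$, $B^+(r)=\{b_i\}$, $B^-(r)=\{c_i\}$, $B^{--}(r)=\{d_i\}$, $B(r)=B^+(r)\cup\{not\,c: c\in B^-(r)\}\cup\{not\,not\,d:d\in B^{--}(r)\}$ (elements of $B(r)$ are literals); a rule is written $H(r)\leftarrow B(r)$. $\Sigma(r)$, $\Sigma(P)$ are the atoms occurring in $r$, $P$. Reduct: $P^I=\{H(r)\leftarrow B^+(r): r\in P, B^-(r)\cap I=\emptyset, B^{--}(r)\subseteq I\}$. $I$ classically satisfies $r$ if $B^+(r)\subseteq I$, $B^-(r)\cap I=\emptyset$, $B^{--}(r)\subseteq I$ imply $H(r)\cap I\ne\emptyset$. An HT-interpretation $\langle X,Y\rangle$ ($X\subseteq Y$) is an HT-model of $P$ if $Y$ classically satisfies all rules of $P$ and $X$ all rules of $P^Y$; $\mathcal{HT}(P)$ is the set of HT-models of $P$ with $X,Y\subseteq\Sigma(P)$. $Y$ is an answer set of $P$ if $\langle Y,Y\rangle\in\mathcal{HT}(P)$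 and no $X\subsetneq Y$ has $\langle X,Y\rangle\in\mathcal{HT}(P)$; $AS(P)$ is the set of answer sets. Criterion $\Omega$: for a program $P$, $V\subseteq\Sigma$, $Y\subseteq\Sigma\setminus V$, $A\subseteq V$, let $R^{Y,A}=\{X\setminus V:\langle X,Y\cup A\rangle\in\mathcal{HT}(P)\}$, $Rel^Y=\{A\subseteq V:\langle Y\cup A,Y\cup A\rangle\in\mathcal{HT}(P)$ and no $A'\subsetneq A$ has $\langle Y\cup A',Y\cup A\rangle\in\mathcal{HT}(P)\}$, $\mathcal{R}^Y=\{R^{Y,A}:A\in Rel^Y\}$. $\langle P,V\rangle$ satisfies $\Omega$ if there is $Y\subseteq\Sigma\setminus V$ such that $\mathcal{R}^Y$ is non-empty and has no least element with respect to $\subseteq$. Normal form: $r$ is tautological if $H(r)\cap B^+(r)\ne\emptyset$ or $B^+(r)\cap B^-(r)\ne\emptyset$ or $B^-(r)\cap B^{--}(r)\ne\emptyset$; $r\in P$ is minimal in $P$ if no $r'\in P$ has ($H(r')\subseteq H(r)$ and $B(r')\subsetneq B(r)$) or ($H(r')\subsetneq H(r)$ and $B(r')\subseteq B(r)$). $NF(P)$ is obtained by: 1. removing tautological rules; 2. removing from $B^{--}(r)$ atoms in $B^+(r)$; 3. removing from $H(r)$ atoms in $B^-(r)$; 4. removing rules not minimal in the resulting program. Notation: for a set $S$ of literals, $not\,(S)=\{not\,s:s\in S\}$, $not\,not\,(S)=\{not\,not\,s:s\in S\}$, simplifying $not\,not\,not\,p=not\,p$ and $not\,not\,not\,not\,p=not\,not\,p$.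 $B^{\setminus q}(r)=B(r)\setminus\{q,not\,q,not\,not\,q\}$, $H^{\setminus q}(r)=H(r)\setminus\{q\}$. For a set of rules $Q$, $D_q(Q)$ is the set of all sets $not\,(\{l_1,\dots,l_m\})\cup not\,not\,(\{l_{m+1},\dots,l_n\})$ where $\langle\{r_1,\dots,r_m\},\{r_{m+1},\dots,r_n\}\rangle$ is a partition of $Q$ (parts possibly empty), $l_i\in B^{\setminus q}(r_i)$ for $i\le m$, $l_j\in H^{\setminus q}(r_j)$ for $j>m$ (so $D_q(\emptyset)=\{\emptyset\}$). The operator $f_{SP}$: let $P'=NF(P)$, $R=\{r\in P': q\notin\Sigma(r)\}$, $R_0=\{r\in P':q\in B(r)\}$, $R_1=\{r\in P': not\,q\in B(r)\}$, $R_2=\{r\in P': not\,not\,q\in B(r), q\notin H(r)\}$, $R_3=\{r\in P': not\,not\,q\in B(r), q\in H(r)\}$, $R_4=\{r\in P': not\,not\,q\notin B(r), q\in H(r)\}$. $P''$ consists of: every $r\in R$; and (1a) for $r_0\in R_0$, $r_4\in R_4$: $H(r_0)\cup H^{\setminus q}(r_4)\leftarrow B^{\setminus q}(r_0)\cup B(r_4)$; (2a) for $r_0\in R_0$, $r_3\in R_3$, $r'\in R_1\cup R_4$: $H(r_0)\cup H^{\setminus q}(r_3)\leftarrow B^{\setminus q}(r_0)\cup B^{\setminus q}(r_3)\cup not\,(H^{\setminus q}(r'))\cup not\,not\,(B^{\setminus q}(r'))$; (3a) for $r_0\in R_0$, $r_3\in R_3$, $h\in H(r_0)$, $D\in D_q((R_0\cup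 R_2)\setminus\{r_0\})$: $H(r_0)\leftarrow B^{\setminus q}(r_0)\cup\{not\,not\,h\}\cup D\cup B^{\setminus q}(r_3)\cup not\,(H^{\setminus q}(r_3))$; (1b) for $r_2\in R_2$, $r_4\in R_4$: $H(r_2)\leftarrow B^{\setminus q}(r_2)\cup not\,(H^{\setminus q}(r_4))\cup not\,not\,(B(r_4))$; (2b) for $r_2\in R_2$, $r_3\in R_3$, $r'\in R_1\cup R_4$: $H(r_2)\leftarrow B^{\setminus q}(r_2)\cup not\,(H^{\setminus q}(r_3)\cup H^{\setminus q}(r'))\cup not\,not\,(B^{\setminus q}(r_3)\cup B^{\setminus q}(r'))$; (3b) for $r_2\in R_2$, $r_3\in R_3$, $h\in H(r_2)$, $D\in D_q((R_0\cup R_2)\setminus\{r_2\})$: $H(r_2)\leftarrow B^{\setminus q}(r_2)\cup not\,(H^{\setminus q}(r_3))\cup not\,not\,(B^{\setminus q}(r_3)\cup\{h\})\cup D$; (4) for $r'\in R_1\cup R_4$, $D\in D_q(R_3\cup R_4)$ with $D\cap not\,(B^{\setminus q}(r'))=\emptyset$: $H^{\setminus q}(r')\leftarrow B^{\setminus q}(r')\cup D$; (5) for $r'\in R_1\cup R_4$, $r_3\in R_3$, $r\in R_0\cup R_2$, $D\in D_q(R_4)$ with $D\cap not\,(B^{\setminus q}(r'))=\emptyset$: $H^{\setminus q}(r')\leftarrow B^{\setminus q}(r')\cup not\,(H(r)\cup H^{\setminus q}(r_3))\cup not\,not\,(B^{\setminus q}(r)\cup B^{\setminus q}(r_3))\cup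 D$; (6) for $r'\in R_1\cup R_4$, $r_3\in R_3$, $h\in H^{\setminus q}(r')$, $D\in D_q((R_1\cup R_4)\setminus\{r'\})$: $H^{\setminus q}(r')\leftarrow B^{\setminus q}(r')\cup not\,(H^{\setminus q}(r_3))\cup not\,not\,(B^{\setminus q}(r_3)\cup\{h\})\cup D$; (7) for $r_0\in R_0$, $r_3,r_3'\in R_3$ with $r_3\ne r_3'$, $D\in D_q((R_0\cup R_2)\setminus\{r_0\})$, $h\in H(r_0)$: $H(r_0)\cup H^{\setminus q}(r_3)\leftarrow B^{\setminus q}(r_0)\cup B^{\setminus q}(r_3)\cup not\,(H^{\setminus q}(r_3'))\cup not\,not\,(B^{\setminus q}(r_3')\cup\{h\})\cup D$. Then $f_{SP}(P,q)=NF(P'')$. *)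

From HB Require Import structures.
From mathcomp Require Import all_boot.
From mathcomp Require Import boolp.

Set Implicit Arguments.
Unset Strict Implicit.
Unset Printing Implicit Defensive.

(* Atoms: a finite propositional signature A (a finType).
   A rule  a1 v ... v ak <- b1..bl, not c1..not cm, not not d1..not not dn
   is the quadruple (H, B+, B-, B--) of finite sets of atoms. *)
Notation rule A := ({set A} * {set A} * {set A} * {set A})%type.
Notation program A := {set rule A}.

Section ASP.
Variable A : finType.

Definition Hd  (r : rule A) : {set A} := r.1.1.1.
Definition Bp  (r : rule A) : {set A} := r.1.1.2.
Definition Bm  (r : rule A) : {set A} := r.1.2.
Definition Bnn (r : rule A) : {set A} := r.2.

Definition sig_rule (r : rule A) : {set A} := Hd r :|: Bp r :|: Bm r :|: Bnn r.
Definition sig_prog (P : program A) : {set A} := \bigcup_(r in P) sig_rule r.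

Definition lit := (A + A + A)%type.
Definition pos (a : A) : lit := inl (inl a).
Definition neg (a : A) : lit := inl (inr a).
Definition nn  (a : A) : lit := inr a.

Definition Blits (r : rule A) : {set lit} :=
  [set pos a | a in Bp r] :|: [set neg a | a in Bm r] :|: [set nn a | a in Bnn r].

(* not l and not not l, with not not not p = not p, not not not not p = not not p *)
Definition notl (l : lit) : lit :=
  match l with inl (inl a) => neg a | inl (inr a) => nn a | inr a => neg a end.
Definition nnl (l : lit) : lit :=
  match l with inl (inl a) => nn a | inl (inr a) => neg a | inr a => nn a end.
Definition notS (S : {set lit}) : {set lit} := [set notl l | l in S].
Definition nnS  (S : {set lit}) : {set lit} := [set nnl l | l in S].
Definition posS (S : {set A}) : {set lit} := [set pos a | a in S].

Definition mkrule (h : {set A}) (b : {set lit}) : rule A :=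
  (h, [set a | pos a \in b], [set a | neg a \in b], [set a | nn a \in b]).

Definition csat (I : {set A}) (r : rule A) : bool :=
  [&& Bp r \subset I, [disjoint Bm r & I] & Bnn r \subset I] ==>
    (Hd r :&: I != set0).

Definition reduct (P : program A) (I : {set A}) : program A :=
  [set ((Hd r, Bp r, set0, set0) : rule A)
     | r in [set r in P | [disjoint Bm r & I] && (Bnn r \subset I)]].

Definition ht (P : program A) (X Y : {set A}) : bool :=
  [&& X \subset Y, Y \subset sig_prog P,
      [forall r in P, csat Y r] & [forall r in reduct P Y, csat X r]].

Definition AS (P : program A) : {set {set A}} :=
  [set Y | ht P Y Y && [forall X : {set A}, (X \proper Y) ==> ~~ ht P X Y]].

Definition RYA (P : program A) (V Y A' : {set A}) : {set {set A}} :=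
  [set X :\: V | X in [set X | ht P X (Y :|: A')]].

Definition Rel (P : program A) (V Y : {set A}) : {set {set A}} :=
  [set A' : {set A} | [&& A' \subset V, ht P (Y :|: A') (Y :|: A')
            & [forall A'' : {set A}, (A'' \proper A') ==> ~~ ht P (Y :|: A'') (Y :|: A')]]].

Definition calR (P : program A) (V Y : {set A}) : {set {set {set A}}} :=
  [set RYA P V Y A' | A' in Rel P V Y].

Definition Omega (P : program A) (V : {set A}) : Prop :=
  exists Y : {set A}, Y \subset ~: V /\ calR P V Y != set0 /\
    ~ (exists L, L \in calR P V Y /\ forall R', R' \in calR P V Y -> L \subset R').

Definition taut (r : rule A) : bool :=
  (Hd r :&: Bp r != set0) || (Bp r :&: Bm r != set0) || (Bm r :&: Bnn r != set0).

Definition step23 (r : rule A) : rule A :=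
  (Hd r :\: Bm r, Bp r, Bm r, Bnn r :\: Bp r).

Definition minimal_in (P : program A) (r : rule A) : bool :=
  [forall r' in P,
    ~~ (((Hd r' \subset Hd r) && (Blits r' \proper Blits r)) ||
        ((Hd r' \proper Hd r) && (Blits r' \subset Blits r)))].

Definition NF (P : program A) : program A :=
  let P2 := [set step23 r | r in [set r in P | ~~ taut r]] in
  [set r in P2 | minimal_in P2 r].

Definition Bq (q : A) (r : rule A) : {set lit} := Blits r :\: [set pos q; neg q; nn q].
Definition Hq (q : A) (r : rule A) : {set A} := Hd r :\ q.

Definition Dq (q : A) (Q : program A) (D : {set lit}) : Prop :=
  exists (Q1 : program A) (l : rule A -> lit),
    [/\ Q1 \subset Q,
        (forall r, r \in Q1 -> l r \in Bq q r),
        (forall r, r \in Q :\: Q1 -> l r \in posS (Hq q r)) &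
        D = notS (l @: Q1) :|: nnS (l @: (Q :\: Q1))].

Section FSP.
Variables (P' : program A) (q : A).
Definition Rq := [set r in P' | q \notin sig_rule r].
Definition R0 := [set r in P' | q \in Bp r].
Definition R1 := [set r in P' | q \in Bm r].
Definition R2 := [set r in P' | (q \in Bnn r) && (q \notin Hd r)].
Definition R3 := [set r in P' | (q \in Bnn r) && (q \in Hd r)].
Definition R4 := [set r in P' | (q \notin Bnn r) && (q \in Hd r)].

Definition new_rule (x : rule A) : Prop :=
  (* (1a) *)
  (exists r0 r4, [/\ r0 \in R0, r4 \in R4 &
     x = mkrule (Hd r0 :|: Hq q r4) (Bq q r0 :|: Blits r4)]) \/
  (* (2a) *)
  (exists r0 r3 r', [/\ r0 \in R0, r3 \in R3, r' \in R1 :|: R4 &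
     x = mkrule (Hd r0 :|: Hq q r3)
       (Bq q r0 :|: Bq q r3 :|: notS (posS (Hq q r')) :|: nnS (Bq q r'))]) \/
  (* (3a) *)
  (exists r0 r3 h D, [/\ r0 \in R0, r3 \in R3, h \in Hd r0,
     Dq q ((R0 :|: R2) :\ r0) D &
     x = mkrule (Hd r0)
       (Bq q r0 :|: [set nn h] :|: D :|: Bq q r3 :|: notS (posS (Hq q r3)))]) \/
  (* (1b) *)
  (exists r2 r4, [/\ r2 \in R2, r4 \in R4 &
     x = mkrule (Hd r2) (Bq q r2 :|: notS (posS (Hq q r4)) :|: nnS (Blits r4))]) \/
  (* (2b) *)
  (exists r2 r3 r', [/\ r2 \in R2, r3 \in R3, r' \in R1 :|: R4 &
     x = mkrule (Hd r2)
       (Bq q r2 :|: notS (posS (Hq q r3 :|: Hq q r'))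
                :|: nnS (Bq q r3 :|: Bq q r'))]) \/
  (* (3b) *)
  (exists r2 r3 h D, [/\ r2 \in R2, r3 \in R3, h \in Hd r2,
     Dq q ((R0 :|: R2) :\ r2) D &
     x = mkrule (Hd r2)
       (Bq q r2 :|: notS (posS (Hq q r3)) :|: nnS (Bq q r3 :|: [set pos h]) :|: D)]) \/
  (* (4) *)
  (exists r' D, [/\ r' \in R1 :|: R4, Dq q (R3 :|: R4) D,
     D :&: notS (Bq q r') = set0 &
     x = mkrule (Hq q r') (Bq q r' :|: D)]) \/
  (* (5) *)
  (exists r' r3 r D, [/\ r' \in R1 :|: R4, r3 \in R3, r \in R0 :|: R2,
     Dq q R4 D /\ D :&: notS (Bq q r') = set0 &
     x = mkrule (Hq q r')
       (Bq q r' :|: notS (posS (Hd r :|: Hq q r3))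
                :|: nnS (Bq q r :|: Bq q r3) :|: D)]) \/
  (* (6) *)
  (exists r' r3 h D, [/\ r' \in R1 :|: R4, r3 \in R3, h \in Hq q r',
     Dq q ((R1 :|: R4) :\ r') D &
     x = mkrule (Hq q r')
       (Bq q r' :|: notS (posS (Hq q r3)) :|: nnS (Bq q r3 :|: [set pos h]) :|: D)]) \/
  (* (7) *)
  (exists r0 r3 r3' D h, [/\ r0 \in R0, r3 \in R3, r3' \in R3, r3 != r3' &
     [/\ Dq q ((R0 :|: R2) :\ r0) D, h \in Hd r0 &
     x = mkrule (Hd r0 :|: Hq q r3)
       (Bq q r0 :|: Bq q r3 :|: notS (posS (Hq q r3'))
                :|: nnS (Bq q r3' :|: [set pos h]) :|: D)]]).
End FSP.

Definition fSP (P : program A) (q : A) : program A :=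
  let P' := NF P in
  NF ([set x | (x \in Rq P' q) || `[< new_rule P' q x >] ]).

End ASP.

(* Split every HT-interpretation at [q] as <X + a q, Y + b q> with [q] outside [X]
   and [Y]. After normalisation each rule of [P] belongs to one of the classes
   R, R_0, ..., R_4 used to define f_SP, and on a split interpretation it either
   holds because of the value of [q] or reduces to its [q]-free part
   [H(r) \ q <- B^{\q}(r)]. Membership of [b {q}] in Rel^Y and of [X] in
   R^{Y, b {q}} thereby become statements about which classes of reduced rules
   hold in <X, Y> and in <Y, Y>. Checking the rules (1a)-(7) one by one shows that
   the HT-models <X, Y> of f_SP(P, q) are exactly those for which some [A] lies in
   Rel^Y and [X] lies in R^{Y, A} for every such [A]. Forgetting [q] then maps the
   answer sets of P u R onto those of f_SP(P, q) u R; conversely, the [A] to be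
   added back must have the least R^{Y, A}, which exists because Omega fails. *)

From mathcomp Require Import all_boot.
From mathcomp Require Import boolp.
From mathcomp Require Import zify.

Set Implicit Arguments.
Unset Strict Implicit.
Unset Printing Implicit Defensive.

Lemma forall_inU (T : finType) (p : pred T) (S1 S2 : {set T}) :
  [forall x in S1 :|: S2, p x] = [forall x in S1, p x] && [forall x in S2, p x].
Proof.
apply/forall_inP/andP => [H|[/forall_inP H1 /forall_inP H2] x].
  by split; apply/forall_inP => x Hx; apply: H; rewrite in_setU Hx ?orbT.
by rewrite in_setU => /orP[]; auto.
Qed.

Lemma forall_in_andb (T : finType) (p1 p2 : pred T) (S : {set T}) :
  [forall x in S, p1 x && p2 x] = [forall x in S, p1 x] && [forall x in S, p2 x].
Proof.
apply/forall_inP/andP => [H|[/forall_inP H1 /forall_inP H2] x xS].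
  by split; apply/forall_inP => x /H /andP[].
by rewrite H1 ?H2.
Qed.

Lemma forall_in_imset (T T' : finType) (f : T -> T') (p : pred T') (S : {set T}) :
  [forall y in f @: S, p y] = [forall x in S, p (f x)].
Proof.
apply/forall_inP/forall_inP => [H x Hx|H y /imsetP[x Hx ->]]; last exact: H.
exact/H/imset_f.
Qed.

Lemma forall_in1 (T : finType) (p : pred T) x : [forall y in [set x], p y] = p x.
Proof.
apply/forall_inP/idP => [H|H y]; first by apply: H; rewrite inE.
by rewrite inE => /eqP ->.
Qed.

Lemma forall_in_subset (T : finType) (p : pred T) (S1 S2 : {set T}) : S1 \subset S2 ->
  [forall x in S2, (x \in S1) ==> p x] = [forall x in S1, p x].
Proof.
move=> /subsetP s12; apply/forall_inP/forall_inP => H x xS.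
  exact: implyP (H x (s12 x xS)) xS.
by apply/implyP => /H.
Qed.

(** * Here-and-there semantics *)

Section HTSemantics.
Variable A : finType.
Implicit Types (X Y Z S H : {set A}) (r : rule A) (P Q : program A) (L : {set lit A}).

(* Truth of a literal in the "here" world of the HT-interpretation <X, Y>:
   negations are evaluated in the "there" world, so [litH Y Y] is truth in Y. *)
Definition litH X Y (l : lit A) : bool :=
  match l with inl (inl a) => a \in X | inl (inr a) => a \notin Y | inr a => a \in Y end.

Definition lit_atom (l : lit A) : A :=
  match l with inl (inl a) => a | inl (inr a) => a | inr a => a end.

Definition bodyH X Y L := [forall l in L, litH X Y l].
Definition bodyF Y L := [forall l in L, ~~ litH Y Y l].
Definition ruleH X Y r := bodyH X Y (Blits r) ==> (Hd r :&: X != set0).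
Definition ht_rule X Y r := ruleH Y Y r && ruleH X Y r.
Definition htmod P X Y := (X \subset Y) && [forall r in P, ht_rule X Y r].

Lemma bodyHU X Y L1 L2 : bodyH X Y (L1 :|: L2) = bodyH X Y L1 && bodyH X Y L2.
Proof. exact: forall_inU. Qed.

Lemma bodyFU Y L1 L2 : bodyF Y (L1 :|: L2) = bodyF Y L1 && bodyF Y L2.
Proof. exact: forall_inU. Qed.

Lemma bodyH1 X Y l : bodyH X Y [set l] = litH X Y l.
Proof. exact: forall_in1. Qed.

Lemma litH_notl X Y l : litH X Y (notl l) = ~~ litH Y Y l.
Proof. by case: l => [[a|a]|a] //=; rewrite negbK. Qed.

Lemma bodyH_notS X Y L : bodyH X Y (notS L) = bodyF Y L.
Proof. by rewrite /bodyH /notS forall_in_imset; apply: eq_forallb => l; rewrite litH_notl. Qed.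

Lemma bodyH_nnS X Y L : bodyH X Y (nnS L) = bodyH Y Y L.
Proof. by rewrite /bodyH /nnS forall_in_imset; apply: eq_forallb => -[[a|a]|a]. Qed.

Lemma bodyF_posS Y H : bodyF Y (posS H) = (H :&: Y == set0).
Proof.
rewrite /bodyF /posS forall_in_imset /= setI_eq0 disjoint_subset.
by apply/forall_inP/subsetP => HY a /HY; rewrite ?inE.
Qed.

Lemma bodyH_Blits X Y r :
  bodyH X Y (Blits r) = [&& Bp r \subset X, [disjoint Bm r & Y] & Bnn r \subset Y].
Proof.
rewrite /Blits !bodyHU /bodyH !forall_in_imset /= -andbA disjoint_subset.
congr [&& _, _ & _]; apply/forall_inP/subsetP => HXY a /HXY //.
Qed.

Lemma bodyH_sub X Y L L' : L' \subset L -> bodyH X Y L -> bodyH X Y L'.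
Proof. by move=> /subsetP sL /forall_inP HL; apply/forall_inP => l /sL /HL. Qed.

Lemma bodyH_mono X X' Y L : X \subset X' -> bodyH X Y L -> bodyH X' Y L.
Proof.
move=> /subsetP sX /forall_inP HL; apply/forall_inP => l /HL.
by case: l => [[a|a]|a] //= /sX.
Qed.

Lemma mem_Blits r l : (l \in Blits r) =
  match l with inl (inl a) => a \in Bp r | inl (inr a) => a \in Bm r | inr a => a \in Bnn r end.
Proof.
rewrite /Blits /pos /neg /nn !in_setU; case: l => [[a|a]|a]; apply/idP/idP => [|Ha];
  rewrite ?(imset_f _ Ha) ?orbT //;
  by case/orP => [/orP[]|] /imsetP[b Hb E]; try discriminate; case: E => ->.
Qed.

Lemma Blits_mkrule h L : Blits (mkrule h L) = L.
Proof. by apply/setP => l; rewrite mem_Blits; case: l => [[a|a]|a]; rewrite inE. Qed.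

Lemma csat_ruleH Y r : csat Y r = ruleH Y Y r.
Proof. by rewrite /ruleH bodyH_Blits. Qed.

Lemma csat_reduct X r :
  csat X ((Hd r, Bp r, set0, set0) : rule A) = (Bp r \subset X) ==> (Hd r :&: X != set0).
Proof. by rewrite /csat /Hd /Bp /Bm /Bnn /= -setI_eq0 set0I eqxx sub0set !andbT. Qed.

Lemma reduct_ruleH P X Y :
  [forall r in reduct P Y, csat X r] = [forall r in P, ruleH X Y r].
Proof.
rewrite /reduct forall_in_imset; apply/forall_inP/forall_inP => H r Hr.
  rewrite /ruleH bodyH_Blits; apply/implyP => /and3P[bp dm bn].
  by have := H r; rewrite inE Hr dm bn csat_reduct bp => /(_ isT).
move: Hr; rewrite inE => /andP[Hr /andP[dm bn]].
by move: (H r Hr); rewrite /ruleH bodyH_Blits dm bn !andbT csat_reduct.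
Qed.

Lemma htE P X Y : ht P X Y = htmod P X Y && (Y \subset sig_prog P).
Proof.
rewrite /ht /htmod reduct_ruleH forall_in_andb.
have -> : [forall r in P, csat Y r] = [forall r in P, ruleH Y Y r].
  by apply: eq_forallb => r; rewrite csat_ruleH.
by case: (X \subset Y); case: (Y \subset sig_prog P); rewrite /= ?andbT ?andbF.
Qed.

Lemma htmodU P1 P2 X Y : htmod (P1 :|: P2) X Y = htmod P1 X Y && htmod P2 X Y.
Proof. by rewrite /htmod forall_inU; case: (X \subset Y). Qed.

Lemma sig_rule_sub P r : r \in P -> sig_rule r \subset sig_prog P.
Proof. exact: bigcup_sup. Qed.

Lemma Hd_sig r : Hd r \subset sig_rule r.
Proof. by rewrite /sig_rule -!setUA subsetUl. Qed.

Lemma lit_atom_Blits r l : l \in Blits r -> lit_atom l \in sig_rule r.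
Proof. by rewrite mem_Blits /sig_rule; case: l => [[a|a]|a] /= Ha; rewrite !inE Ha ?orbT. Qed.

Lemma ruleH_restr X Y S r : sig_rule r \subset S ->
  ruleH X Y r = ruleH (X :&: S) (Y :&: S) r.
Proof.
move=> sS; have HdS := subset_trans (Hd_sig r) sS.
have EH Z : Hd r :&: Z = Hd r :&: (Z :&: S) by rewrite [Z :&: S]setIC setIA (setIidPl HdS).
rewrite /ruleH -EH; congr (_ ==> _); apply: eq_forallb => l.
case Hl: (l \in Blits r) => //=; have := subsetP sS _ (lit_atom_Blits Hl).
by case: l {Hl} => [[a|a]|a] /= aS; rewrite inE aS ?andbT.
Qed.

Lemma htmod_restr P X Y S : sig_prog P \subset S ->
  htmod P X Y = (X \subset Y) && htmod P (X :&: S) (Y :&: S).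
Proof.
move=> sS; rewrite /htmod; case sXY: (X \subset Y) => //=.
rewrite setSI //=; apply: eq_forallb => r; case Hr: (r \in P) => //=.
have sr := subset_trans (sig_rule_sub Hr) sS.
by rewrite /ht_rule (ruleH_restr X Y sr) (ruleH_restr Y Y sr).
Qed.

Lemma minimal_htmod_sig P Y : htmod P Y Y ->
  [forall X : {set A}, (X \proper Y) ==> ~~ htmod P X Y] -> Y \subset sig_prog P.
Proof.
move=> hY /forallP minY; apply/subsetP => a aY; apply/negPn/negP => aP.
have sS : sig_prog P \subset ~: [set a].
  by apply/subsetP => b bP; rewrite !inE; apply: contraNneq aP => <-.
have := minY (Y :\ a); rewrite properD1 //= => /negP; apply.
rewrite (@htmod_restr P (Y :\ a) Y _ sS) subD1set setDE -setIA setIid.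
by move: hY; rewrite (@htmod_restr P Y Y _ sS) subxx.
Qed.

Lemma in_AS P Y :
  (Y \in AS P) = htmod P Y Y && [forall X : {set A}, (X \proper Y) ==> ~~ htmod P X Y].
Proof.
rewrite /AS inE !htE; apply/idP/idP => [/andP[/andP[-> sY] /forallP minY]|/andP[hY minY]].
  by apply/forallP => X; apply/implyP => /(implyP (minY X)); rewrite htE sY andbT.
rewrite hY (minimal_htmod_sig hY minY) /=; apply/forallP => X.
by apply/implyP => /(implyP (forallP minY X)); rewrite htE negb_and => ->.
Qed.

Lemma ruleH_dom X Y r r' : Hd r' \subset Hd r -> Blits r' \subset Blits r ->
  ruleH X Y r' -> ruleH X Y r.
Proof.
move=> sH sB /implyP h'; apply/implyP => /(bodyH_sub sB) /h' /set0Pn[a].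
by rewrite inE => /andP[/(subsetP sH) aH aX]; apply/set0Pn; exists a; rewrite inE aH.
Qed.

Lemma ruleH_taut X Y r : X \subset Y -> taut r -> ruleH X Y r.
Proof.
move=> /subsetP sXY; rewrite /taut /ruleH bodyH_Blits.
case/orP => [/orP[]|] /set0Pn[a]; rewrite inE => /andP[a1 a2];
  apply/implyP => /and3P[/subsetP bp dm /subsetP bn].
- by apply/set0Pn; exists a; rewrite inE a1 bp.
- by have := sXY a (bp a a1); rewrite (disjointFr dm a2).
- by have := bn a a2; rewrite (disjointFr dm a1).
Qed.

Lemma ruleH_step23 X Y r : X \subset Y -> ruleH X Y (step23 r) = ruleH X Y r.
Proof.
move=> sXY; rewrite /ruleH !bodyH_Blits /step23 /Hd /Bp /Bm /Bnn /=.
set h := r.1.1.1; set bp := r.1.1.2; set bm := r.1.2; set bn := r.2.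
case bpX: (bp \subset X) => //=.
have bpY := subset_trans bpX sXY.
have -> : (bn :\: bp \subset Y) = (bn \subset Y).
  apply/idP/idP => /subsetP H; apply/subsetP => a Ha; last by apply: H; case/setDP: Ha.
  by case: (boolP (a \in bp)) => [/(subsetP bpY)|nb]; last by apply: H; rewrite inE nb.
case dm: [disjoint bm & Y] => //=.
suff -> : (h :\: bm) :&: X = h :&: X by [].
apply/setP => a; rewrite !inE; case aX: (a \in X); rewrite ?andbF //.
by rewrite (disjointFl dm (subsetP sXY a aX)).
Qed.

Definition dominates r' r := (Hd r' \subset Hd r) && (Blits r' \subset Blits r).

Lemma exists_minimal_dominating Q r : r \in Q ->
  exists2 r', r' \in [set x in Q | minimal_in Q x] & dominates r' r.
Proof.
move: {2}(#|Hd r| + #|Blits r|) (leqnn (#|Hd r| + #|Blits r|)) => n.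
elim: n r => [|n IH] r Hn Hr; (case: (boolP (minimal_in Q r)) => [m|];
  first by exists r; rewrite ?inE ?Hr ?m // /dominates !subxx);
  rewrite /minimal_in negb_forall_in => /exists_inP[r' Hr' /negbNE d].
  by case/orP: d => /andP[a b]; [have := proper_card b | have := proper_card a]; lia.
have Hlt : #|Hd r'| + #|Blits r'| <= n.
  case/orP: d => /andP[a b].
    by have := proper_card b; have := subset_leq_card a; lia.
  by have := proper_card a; have := subset_leq_card b; lia.
have [r2 H2 /andP[d1 d2]] := IH r' Hlt Hr'; exists r2 => //.
case/orP: d => [/andP[a /proper_sub b]|/andP[/proper_sub a b]];
  by rewrite /dominates (subset_trans d1 a) (subset_trans d2 b).
Qed.

Lemma mem_NF P r : r \in NF P -> exists2 r0, (r0 \in P) && ~~ taut r0 & r = step23 r0.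
Proof. by rewrite /NF inE => /andP[/imsetP[r0 + ->] _]; rewrite inE; exists r0. Qed.

(* Tautologies and dominated rules do not constrain HT-models. *)
Lemma NF_ruleH P X Y : X \subset Y ->
  [forall r in NF P, ruleH X Y r] = [forall r in P, ruleH X Y r].
Proof.
move=> sXY; apply/forall_inP/forall_inP => H r Hr; last first.
  by have [r0 /andP[H0 _] ->] := mem_NF Hr; rewrite ruleH_step23 // H.
case: (boolP (taut r)) => t; first exact: ruleH_taut.
rewrite -ruleH_step23 //.
have Hr2 : step23 r \in [set step23 r | r in [set r in P | ~~ taut r]].
  by apply: imset_f; rewrite inE Hr t.
have [r' Hr' /andP[d1 d2]] := exists_minimal_dominating Hr2.
exact: ruleH_dom d1 d2 (H _ Hr').
Qed.

Lemma htmod_NF P X Y : htmod (NF P) X Y = htmod P X Y.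
Proof.
rewrite /htmod; case sXY: (X \subset Y) => //=.
by rewrite !forall_in_andb !NF_ruleH.
Qed.

Definition normal_rule r := [&& [disjoint Hd r & Bp r], [disjoint Hd r & Bm r],
  [disjoint Bp r & Bm r], [disjoint Bnn r & Bp r] & [disjoint Bnn r & Bm r]].

Lemma NF_normal P r : r \in NF P -> normal_rule r.
Proof.
case/mem_NF => r0 /andP[_]; rewrite /taut !negb_or !negbK !setI_eq0.
move=> /andP[/andP[d1 d2] d3] ->; rewrite /normal_rule /step23 /Hd /Bp /Bm /Bnn /=.
rewrite -!setI_eq0; apply/and5P; split; apply/eqP/setP => a; rewrite !inE.
all: case h: (a \in r0.1.1.1); case p: (a \in r0.1.1.2); case m: (a \in r0.1.2);
  case n: (a \in r0.2) => //=.
all: first [ by rewrite (disjointFr d1 h) in p | by rewrite (disjointFr d2 p) in m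
           | by rewrite (disjointFr d3 m) in n ].
Qed.

Lemma sig_NF P r : r \in NF P -> exists2 r0, r0 \in P & sig_rule r \subset sig_rule r0.
Proof.
case/mem_NF => r0 /andP[H0 _] ->; exists r0 => //.
apply/subsetP => a; rewrite /sig_rule /step23 /Hd /Bp /Bm /Bnn /= !inE.
by case: (a \in r0.1.1.1); case: (a \in r0.1.1.2); case: (a \in r0.1.2); case: (a \in r0.2).
Qed.

End HTSemantics.

(** * Splitting interpretations at an atom *)

Section SplitAtom.
Variables (A : finType) (q : A).
Implicit Types (X Y Z H : {set A}) (r : rule A) (Q : program A) (L D : {set lit A}).

Definition withq Z (b : bool) := if b then q |: Z else Z.

Lemma mem_withq Z b a : a != q -> (a \in withq Z b) = (a \in Z).
Proof. by move=> aq; case: b; rewrite /withq // in_setU1 (negbTE aq). Qed.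

Lemma q_withq Z b : q \notin Z -> (q \in withq Z b) = b.
Proof. by move=> qZ; case: b; rewrite /withq ?setU11 ?(negbTE qZ). Qed.

Lemma withqK Z b : q \notin Z -> withq Z b :\ q = Z.
Proof.
move=> qZ; case: b; rewrite /withq; first exact: setU1K.
by apply/setP => a; rewrite in_setD1; case: eqP => // ->; rewrite (negbTE qZ).
Qed.

Lemma withq_D1 Z : Z = withq (Z :\ q) (q \in Z).
Proof.
apply/setP => a; rewrite /withq; case qZ: (q \in Z); rewrite !inE;
  by case: eqP => [->|] //=; rewrite qZ.
Qed.

Lemma withq_sub X Y (a b : bool) : X \subset Y -> a ==> b -> withq X a \subset withq Y b.
Proof.
move=> sXY; case: a; case: b => //= _; first exact: setUS.
exact: subset_trans sXY (subsetUr _ _).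
Qed.

Lemma Bq_atom r l : l \in Bq q r -> lit_atom l != q.
Proof.
rewrite /Bq inE => /andP[+ _]; apply: contra.
by case: l => [[a|a]|a] /= /eqP ->; rewrite !inE eqxx ?orbT.
Qed.

Lemma bodyH_Bq_withq X Y (a b : bool) r :
  bodyH (withq X a) (withq Y b) (Bq q r) = bodyH X Y (Bq q r).
Proof.
apply: eq_forallb => l; case Hl: (l \in Bq q r) => //=; have := Bq_atom Hl.
by case: l {Hl} => [[c|c]|c] /= cq; rewrite !mem_withq.
Qed.

Lemma bodyH_Blits_q X Y r : bodyH X Y (Blits r) = bodyH X Y (Bq q r) &&
  [&& (q \in Bp r) ==> (q \in X), (q \in Bm r) ==> (q \notin Y) & (q \in Bnn r) ==> (q \in Y)].
Proof.
apply/idP/andP => [H|[/forall_inP HBq /and3P[/implyP i1 /implyP i2 /implyP i3]]].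
  split; first exact: bodyH_sub (subsetDl _ _) H.
  move/forall_inP: H => H; apply/and3P; split; apply/implyP => Hq.
  - by apply: (H (pos q)); rewrite mem_Blits.
  - by apply: (H (neg q)); rewrite mem_Blits.
  - by apply: (H (nn q)); rewrite mem_Blits.
apply/forall_inP => l Hl; case: (boolP (l \in Bq q r)) => [/HBq //|].
rewrite inE Hl andbT negbK !inE => /orP[/orP[]|] /eqP El; move: Hl; rewrite El mem_Blits /=.
- exact: i1.
- exact: i2.
- exact: i3.
Qed.

Lemma Hd_withq Z (b : bool) r : q \notin Z ->
  (Hd r :&: withq Z b != set0) = (Hq q r :&: Z != set0) || b && (q \in Hd r).
Proof.
move=> qZ; apply/set0Pn/idP => [[a]|].
  rewrite inE => /andP[aH aZ]; case: (eqVneq a q) => [Ea|aq].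
    by move: aZ aH; rewrite Ea q_withq // => -> ->; rewrite orbT.
  move: aZ; rewrite mem_withq // => aZ.
  by apply/orP; left; apply/set0Pn; exists a; rewrite !inE aq aH.
case/orP => [/set0Pn[a]|/andP[bt qH]]; last by exists q; rewrite inE qH q_withq.
by rewrite !inE => /andP[/andP[aq aH] aZ]; exists a; rewrite inE aH mem_withq.
Qed.

Lemma ruleH_withq X Y (a b : bool) r : q \notin X -> q \notin Y ->
  ruleH (withq X a) (withq Y b) r =
  (bodyH X Y (Bq q r) && [&& (q \in Bp r) ==> a, (q \in Bm r) ==> ~~ b & (q \in Bnn r) ==> b])
    ==> ((Hq q r :&: X != set0) || a && (q \in Hd r)).
Proof.
by move=> qX qY; rewrite /ruleH bodyH_Blits_q bodyH_Bq_withq Hd_withq // !q_withq.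
Qed.

End SplitAtom.

(** * The rules of f_SP *)

Section NewRules.
Variables (A : finType) (q : A).
Implicit Types (X Y Z H : {set A}) (r : rule A) (Q : program A) (L D : {set lit A}).

Definition qbody X Y r := bodyH X Y (Bq q r).
Definition qhead Z r := Hq q r :&: Z != set0.
Definition covered X Y r := qbody X Y r ==> qhead X r.
Definition covers X Y Q := [forall r in Q, covered X Y r].

Lemma coversU X Y Q1 Q2 : covers X Y (Q1 :|: Q2) = covers X Y Q1 && covers X Y Q2.
Proof. exact: forall_inU. Qed.

Lemma coversP X Y Q : reflect (forall r, r \in Q -> qbody X Y r -> qhead X r) (covers X Y Q).
Proof. by apply: (iffP forall_inP) => H r /H /implyP. Qed.

Lemma coversPn X Y Q :
  reflect (exists2 r, r \in Q & qbody X Y r && ~~ qhead X r) (~~ covers X Y Q).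
Proof.
rewrite /covers negb_forall_in; apply: (iffP exists_inP) => -[r rQ H];
  by exists r => //; move: H; rewrite /covered negb_imply.
Qed.

Lemma covers_sub X Y Q Q' : Q' \subset Q -> covers X Y Q -> covers X Y Q'.
Proof. by move=> /subsetP sQ /coversP HQ; apply/coversP => r /sQ /HQ. Qed.

Lemma covers_D1 X Y Q r : covers X Y (Q :\ r) -> qhead X r -> covers X Y Q.
Proof.
move=> /coversP cQ hr; apply/coversP => r' rQ.
by case: (eqVneq r' r) => [-> //|nr]; apply: cQ; rewrite in_setD1 nr.
Qed.

Lemma qhead_mono X Y r : X \subset Y -> qhead X r -> qhead Y r.
Proof.
move=> sXY /set0Pn[a]; rewrite inE => /andP[aH /(subsetP sXY) aY].
by apply/set0Pn; exists a; rewrite inE aH.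
Qed.

Lemma qbody_there X Y r : X \subset Y -> qbody X Y r -> qbody Y Y r.
Proof. exact: bodyH_mono. Qed.

Lemma qheadP Z r h : h \in Hq q r -> h \in Z -> qhead Z r.
Proof. by move=> hH hZ; apply/set0Pn; exists h; rewrite inE hH. Qed.

Lemma qhead_pick Z r : qhead Z r -> exists2 h, h \in Hq q r & h \in Z.
Proof. by case/set0Pn => h; rewrite inE => /andP[]; exists h. Qed.

Lemma Hq_id r : q \notin Hd r -> Hq q r = Hd r.
Proof.
by move=> qH; apply/setP => a; rewrite /Hq in_setD1; case: eqP => // ->; rewrite (negbTE qH).
Qed.

Lemma Bq_id r : q \notin Bp r -> q \notin Bm r -> q \notin Bnn r -> Bq q r = Blits r.
Proof.
move=> p m n; apply/setP => l; rewrite /Bq in_setD andb_idl // => lB.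
apply/negP; rewrite !inE => /orP[/orP[]|] /eqP El.
all: by move: lB; rewrite El mem_Blits /=; apply/negP.
Qed.

Lemma bodyF_posS_Hq Y r : bodyF Y (posS (Hq q r)) = ~~ qhead Y r.
Proof. by rewrite bodyF_posS negbK. Qed.

Lemma posSU H1 H2 : posS (H1 :|: H2) = posS H1 :|: posS H2.
Proof. exact: imsetU. Qed.

Lemma headU H1 H2 Z : ((H1 :|: H2) :&: Z != set0) = (H1 :&: Z != set0) || (H2 :&: Z != set0).
Proof. by rewrite setIUl setU_eq0 negb_and. Qed.

(* Literals of the form [not l] and [not not l] are evaluated in the there world. *)
Lemma Dq_bodyH Q X Y D : Dq q Q D -> bodyH X Y D = bodyH Y Y D.
Proof. by case=> Q1 [l [_ _ _ ->]]; rewrite !bodyHU !bodyH_notS !bodyH_nnS. Qed.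

Lemma Dq_sound Q Y D : Dq q Q D -> bodyH Y Y D -> covers Y Y Q.
Proof.
case=> Q1 [l [sQ H1 H2 ->]].
rewrite bodyHU bodyH_notS bodyH_nnS => /andP[/forall_inP N /forall_inP B].
apply/coversP => r Hr bYr; case: (boolP (r \in Q1)) => rQ1.
  have := N (l r) (imset_f l rQ1); move/forall_inP: bYr => /(_ _ (H1 r rQ1)).
  by move=> ->.
have rD : r \in Q :\: Q1 by rewrite inE rQ1 Hr.
have := B (l r) (imset_f l rD); have /imsetP[h hH ->] := H2 r rD.
exact: qheadP.
Qed.

Lemma Dq_complete Q Y : covers Y Y Q -> exists2 D, Dq q Q D & bodyH Y Y D.
Proof.
move/coversP=> HQ.
pose Q1 := [set r in Q | ~~ qbody Y Y r].
(* A false body literal for the rules of [Q1], a true head atom for the others;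
   the default [pos q] is never used. *)
pose l r := if [pick l in Bq q r | ~~ litH Y Y l] is Some l then l
            else if [pick h in Hq q r :&: Y] is Some h then pos h else pos q.
have L1 r : r \in Q1 -> (l r \in Bq q r) && ~~ litH Y Y (l r).
  rewrite inE /l => /andP[_ nb]; case: pickP => [l0 -> //|none].
  move: nb; rewrite /qbody /bodyH negb_forall_in => /exists_inP[l0 l0B nl0].
  by have := none l0; rewrite l0B nl0.
have L2 r : r \in Q :\: Q1 -> exists2 h, l r = pos h & h \in Hq q r :&: Y.
  rewrite !inE => /andP[+ rQ]; rewrite rQ negbK => bY.
  have [h0 Hh0 Yh0] := qhead_pick (HQ r rQ bY).
  rewrite /l; case: pickP => [l0 /andP[l0B]|_].
    by move/forall_inP: bY => /(_ _ l0B) ->.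
  case: pickP => [h Hh|none]; first by exists h.
  by move: (none h0); rewrite inE Hh0 Yh0.
exists (notS (l @: Q1) :|: nnS (l @: (Q :\: Q1))).
  exists Q1, l; split => //.
  - by apply/subsetP => r; rewrite inE => /andP[].
  - by move=> r /L1 /andP[].
  - by move=> r /L2 [h -> Hh]; apply: imset_f; move: Hh; rewrite inE => /andP[].
rewrite bodyHU bodyH_notS bodyH_nnS /bodyF /bodyH !forall_in_imset.
apply/andP; split; apply/forall_inP => r; first by move/L1 => /andP[].
by move/L2 => [h -> /setIP[]].
Qed.

Lemma body_notS_disjoint Y D L : bodyH Y Y D -> bodyH Y Y L -> D :&: notS L = set0.
Proof.
move=> /forall_inP HD /forall_inP HL; apply/setP => l; rewrite inE in_set0.
apply/andP => -[lD /imsetP[l' l'L El]].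
by move: (HD l lD); rewrite El litH_notl (HL l' l'L).
Qed.

Ltac eval_new := rewrite /ruleH Blits_mkrule !(bodyHU, bodyH_notS, bodyH_nnS, bodyFU, posSU,
  bodyF_posS_Hq, bodyH1, headU) /= -?andbA.

Lemma ruleH_1a {X Y r0 r4} : q \notin Hd r0 -> Bq q r4 = Blits r4 ->
  ruleH X Y (mkrule (Hd r0 :|: Hq q r4) (Bq q r0 :|: Blits r4)) =
  (qbody X Y r0 && qbody X Y r4) ==> (qhead X r0 || qhead X r4).
Proof. by move=> h0 b4; rewrite -(Hq_id h0) -b4; eval_new. Qed.

Lemma ruleH_2a {X Y r0 r3 r'} : q \notin Hd r0 ->
  ruleH X Y (mkrule (Hd r0 :|: Hq q r3)
    (Bq q r0 :|: Bq q r3 :|: notS (posS (Hq q r')) :|: nnS (Bq q r'))) =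
  [&& qbody X Y r0, qbody X Y r3, ~~ qhead Y r' & qbody Y Y r'] ==> (qhead X r0 || qhead X r3).
Proof. by move=> h0; rewrite -(Hq_id h0); eval_new. Qed.

Lemma ruleH_3a {X Y r0 r3 h D Q} : q \notin Hd r0 -> Dq q Q D ->
  ruleH X Y (mkrule (Hd r0)
    (Bq q r0 :|: [set nn h] :|: D :|: Bq q r3 :|: notS (posS (Hq q r3)))) =
  [&& qbody X Y r0, h \in Y, bodyH Y Y D, qbody X Y r3 & ~~ qhead Y r3] ==> qhead X r0.
Proof. by move=> h0 HD; rewrite -(Hq_id h0); eval_new; rewrite (Dq_bodyH _ _ HD). Qed.

Lemma ruleH_1b {X Y r2 r4} : q \notin Hd r2 -> Bq q r4 = Blits r4 ->
  ruleH X Y (mkrule (Hd r2) (Bq q r2 :|: notS (posS (Hq q r4)) :|: nnS (Blits r4))) =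
  [&& qbody X Y r2, ~~ qhead Y r4 & qbody Y Y r4] ==> qhead X r2.
Proof. by move=> h2 b4; rewrite -(Hq_id h2) -b4; eval_new. Qed.

Lemma ruleH_2b {X Y r2 r3 r'} : q \notin Hd r2 ->
  ruleH X Y (mkrule (Hd r2) (Bq q r2 :|: notS (posS (Hq q r3 :|: Hq q r'))
                                     :|: nnS (Bq q r3 :|: Bq q r'))) =
  [&& qbody X Y r2, ~~ qhead Y r3, ~~ qhead Y r', qbody Y Y r3 & qbody Y Y r'] ==> qhead X r2.
Proof. by move=> h2; rewrite -(Hq_id h2); eval_new. Qed.

Lemma ruleH_3b {X Y r2 r3 h D Q} : q \notin Hd r2 -> Dq q Q D ->
  ruleH X Y (mkrule (Hd r2)
    (Bq q r2 :|: notS (posS (Hq q r3)) :|: nnS (Bq q r3 :|: [set pos h]) :|: D)) =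
  [&& qbody X Y r2, ~~ qhead Y r3, qbody Y Y r3, h \in Y & bodyH Y Y D] ==> qhead X r2.
Proof. by move=> h2 HD; rewrite -(Hq_id h2); eval_new; rewrite (Dq_bodyH _ _ HD). Qed.

Lemma ruleH_4 {X Y r' D Q} : Dq q Q D ->
  ruleH X Y (mkrule (Hq q r') (Bq q r' :|: D)) = (qbody X Y r' && bodyH Y Y D) ==> qhead X r'.
Proof. by move=> HD; eval_new; rewrite (Dq_bodyH _ _ HD). Qed.

Lemma ruleH_5 {X Y r' r3 r D Q} : q \notin Hd r -> Dq q Q D ->
  ruleH X Y (mkrule (Hq q r') (Bq q r' :|: notS (posS (Hd r :|: Hq q r3))
                                       :|: nnS (Bq q r :|: Bq q r3) :|: D)) =
  [&& qbody X Y r', ~~ qhead Y r, ~~ qhead Y r3, qbody Y Y r, qbody Y Y r3 & bodyH Y Y D]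
    ==> qhead X r'.
Proof. by move=> hr HD; rewrite -(Hq_id hr); eval_new; rewrite (Dq_bodyH _ _ HD). Qed.

Lemma ruleH_6 {X Y r' r3 h D Q} : Dq q Q D ->
  ruleH X Y (mkrule (Hq q r')
    (Bq q r' :|: notS (posS (Hq q r3)) :|: nnS (Bq q r3 :|: [set pos h]) :|: D)) =
  [&& qbody X Y r', ~~ qhead Y r3, qbody Y Y r3, h \in Y & bodyH Y Y D] ==> qhead X r'.
Proof. by move=> HD; eval_new; rewrite (Dq_bodyH _ _ HD). Qed.

Lemma ruleH_7 {X Y r0 r3 r3' h D Q} : q \notin Hd r0 -> Dq q Q D ->
  ruleH X Y (mkrule (Hd r0 :|: Hq q r3)
    (Bq q r0 :|: Bq q r3 :|: notS (posS (Hq q r3')) :|: nnS (Bq q r3' :|: [set pos h]) :|: D)) =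
  [&& qbody X Y r0, qbody X Y r3, ~~ qhead Y r3', qbody Y Y r3', h \in Y & bodyH Y Y D]
    ==> (qhead X r0 || qhead X r3).
Proof. by move=> h0 HD; rewrite -(Hq_id h0); eval_new; rewrite (Dq_bodyH _ _ HD). Qed.

End NewRules.

Arguments coversP {A q X Y Q}.
Arguments coversPn {A q X Y Q}.

Section QFree.
Variables (A : finType) (q : A).
Implicit Types (H : {set A}) (r : rule A) (Q : program A) (L : {set lit A}).

Definition qfree L := [forall l in L, lit_atom l != q].

Lemma qfreeU L1 L2 : qfree (L1 :|: L2) = qfree L1 && qfree L2.
Proof. exact: forall_inU. Qed.

Lemma qfree_notS L : qfree (notS L) = qfree L.
Proof. by rewrite /qfree forall_in_imset; apply: eq_forallb => -[[a|a]|a]. Qed.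

Lemma qfree_nnS L : qfree (nnS L) = qfree L.
Proof. by rewrite /qfree forall_in_imset; apply: eq_forallb => -[[a|a]|a]. Qed.

Lemma qfree_posS H : qfree (posS H) = (q \notin H).
Proof.
rewrite /qfree forall_in_imset; apply/forall_inP/idP => [Hf|qH a aH /=].
  by apply/negP => /Hf; rewrite eqxx.
by apply: contraNneq qH => <-.
Qed.

Lemma qfree1 l : qfree [set l] = (lit_atom l != q).
Proof. exact: forall_in1. Qed.

Lemma qfree_Bq r : qfree (Bq q r).
Proof. exact/forall_inP/Bq_atom. Qed.

Lemma mem_Hq_q r : (q \in Hq q r) = false.
Proof. by rewrite /Hq setD11. Qed.

Lemma qfree_Dq Q D : Dq q Q D -> qfree D.
Proof.
case=> Q1 [l [_ H1 H2 ->]]; rewrite qfreeU qfree_notS qfree_nnS /qfree !forall_in_imset.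
apply/andP; split; apply/forall_inP => r Hr; first exact: Bq_atom (H1 r Hr).
have /imsetP[a aH ->] := H2 r Hr.
by apply: (contraTneq _ aH) => /= ->; rewrite mem_Hq_q.
Qed.

Lemma sig_mkrule (h : {set A}) L : q \notin h -> qfree L -> q \notin sig_rule (mkrule h L).
Proof.
move=> qh /forall_inP HL; rewrite /sig_rule /mkrule /Hd /Bp /Bm /Bnn /= !inE (negbTE qh) /=.
by apply/negP => /orP[/orP[]|] /HL; rewrite eqxx.
Qed.

End QFree.

(** * HT-models of f_SP *)

Section Forgetting.
Variables (A : finType) (P' : program A) (q : A).
Hypothesis P'_normal : forall r, r \in P' -> normal_rule r.
Implicit Types (X Y Z : {set A}) (r x : rule A) (Q : program A) (D : {set lit A}).

Local Notation Rq := (Rq P' q).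
Local Notation R0 := (R0 P' q).
Local Notation R1 := (R1 P' q).
Local Notation R2 := (R2 P' q).
Local Notation R3 := (R3 P' q).
Local Notation R4 := (R4 P' q).
Local Notation R02 := (R0 :|: R2).
Local Notation R14 := (R1 :|: R4).
Local Notation R34 := (R3 :|: R4).
Local Notation withq := (withq q).
Local Notation qbody := (qbody q).
Local Notation qhead := (qhead q).
Local Notation covers := (covers q).

Variant rule_class r : Prop :=
 | ClassQ of r \in Rq & q \in Hd r = false & q \in Bp r = false & q \in Bm r = false
     & q \in Bnn r = false
 | Class0 of r \in R0 & q \in Hd r = false & q \in Bp r = true & q \in Bm r = false
     & q \in Bnn r = false
 | Class1 of r \in R1 & q \in Hd r = false & q \in Bp r = false & q \in Bm r = true
     & q \in Bnn r = false
 | Class2 of r \in R2 & q \in Hd r = false & q \in Bp r = false & q \in Bm r = false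
     & q \in Bnn r = true
 | Class3 of r \in R3 & q \in Hd r = true & q \in Bp r = false & q \in Bm r = false
     & q \in Bnn r = true
 | Class4 of r \in R4 & q \in Hd r = true & q \in Bp r = false & q \in Bm r = false
     & q \in Bnn r = false.

(* The normal form leaves only these six ways for [q] to occur in a rule. *)
Lemma rule_classP r : r \in P' -> rule_class r.
Proof.
move=> Hr; case/and5P: (P'_normal Hr) => d1 d2 d3 d4 d5.
case h: (q \in Hd r); case p: (q \in Bp r); case m: (q \in Bm r); case n: (q \in Bnn r);
  try (by rewrite (disjointFr d1 h) in p); try (by rewrite (disjointFr d2 h) in m);
  try (by rewrite (disjointFr d3 p) in m); try (by rewrite (disjointFr d4 n) in p);
  try (by rewrite (disjointFr d5 n) in m).
- by apply: Class3; rewrite // inE Hr n h.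
- by apply: Class4; rewrite // inE Hr n h.
- by apply: Class0; rewrite // inE Hr p.
- by apply: Class1; rewrite // inE Hr m.
- by apply: Class2; rewrite // inE Hr n h.
- by apply: ClassQ; rewrite // inE Hr /sig_rule !inE h p m n.
Qed.

Lemma R_in_P' r : [|| r \in Rq, r \in R0, r \in R1, r \in R2, r \in R3 | r \in R4] -> r \in P'.
Proof. by rewrite !inE -!andb_orr => /andP[]. Qed.

Lemma R02_Hd r : r \in R02 -> q \notin Hd r.
Proof.
move=> Hr; have rP : r \in P' by apply: R_in_P'; case/setUP: Hr => ->; rewrite ?orbT.
by case: (rule_classP rP) Hr => _ h p m n; rewrite !inE ?h ?p ?m ?n ?rP.
Qed.

Lemma R0_Hd r : r \in R0 -> q \notin Hd r.
Proof. by move=> Hr; apply: R02_Hd; rewrite in_setU Hr. Qed.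

Lemma R2_Hd r : r \in R2 -> q \notin Hd r.
Proof. by move=> Hr; apply: R02_Hd; rewrite in_setU Hr orbT. Qed.

Lemma R4_Bq r : r \in R4 -> Bq q r = Blits r.
Proof.
move=> Hr; have rP : r \in P' by apply: R_in_P'; rewrite Hr !orbT.
case: (rule_classP rP) Hr => _ h p m n; rewrite !inE ?h ?p ?m ?n ?rP // => _.
by apply: Bq_id; rewrite ?p ?m ?n.
Qed.

(* On [<X + a q, Y + b q>] (see [ht_rule_withq]) the rules outside [active a b]
   hold in the here world by the value of [q] alone, while those inside reduce to
   their [q]-free part [covered]. *)
Definition active (a b : bool) : program A :=
  [set r in P' | [|| r \in Rq, a && (r \in R0), ~~ b && (r \in R1), b && (r \in R2),
                     [&& b, ~~ a & r \in R3] | ~~ a && (r \in R4)]].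

Lemma ht_rule_withq X Y (a b : bool) r : q \notin X -> q \notin Y -> r \in P' ->
  ht_rule (withq X a) (withq Y b) r =
  ((r \in active b b) ==> covered q Y Y r) && ((r \in active a b) ==> covered q X Y r).
Proof.
move=> qX qY rP; rewrite /ht_rule !ruleH_withq // /covered /qbody /qhead.
case: (rule_classP rP) => _ h p m n; rewrite !inE ?h ?p ?m ?n ?rP;
by case: a; case: b; rewrite /= ?(andbT, andbF, orbF, orbT, implybT, implyFb).
Qed.

Definition qmodel X Y (a b : bool) := [forall r in P', ht_rule (withq X a) (withq Y b) r].

Lemma qmodelE X Y (a b : bool) : q \notin X -> q \notin Y ->
  qmodel X Y a b = covers Y Y (active b b) && covers X Y (active a b).
Proof.
move=> qX qY; have sP c d : active c d \subset P' by apply/subsetP => r; rewrite inE => /andP[].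
rewrite /qmodel /covers -!(forall_in_subset _ (sP _ _)) -forall_in_andb.
by apply: eq_forallb => r; case rP: (r \in P'); rewrite //= ht_rule_withq.
Qed.

Lemma active_ff : active false false = Rq :|: R14.
Proof. by apply/setP => r; rewrite !inE; case: (r \in P'); rewrite /= ?orbF ?orbA. Qed.

Lemma active_tt : active true true = Rq :|: R02.
Proof. by apply/setP => r; rewrite !inE; case: (r \in P'); rewrite /= ?orbF ?orbA. Qed.

Lemma active_ft : active false true = Rq :|: R2 :|: R34.
Proof. by apply/setP => r; rewrite !inE; case: (r \in P'); rewrite /= ?orbF ?orbA. Qed.

(* [relevant Y b]: the set [{q}] (if [b]) or [{}] belongs to [Rel^Y];
   [compatible X Y b]: [X] belongs to [R^{Y, {q}}] (if [b]) or [R^{Y, {}}]. *)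
Definition relevant Y (b : bool) := qmodel Y Y b b && (b ==> ~~ qmodel Y Y false true).
Definition compatible X Y (b : bool) := qmodel X Y false b || b && qmodel X Y true true.

Lemma compatibleP X Y (b : bool) :
  reflect (exists2 a : bool, a ==> b & qmodel X Y a b) (compatible X Y b).
Proof.
apply: (iffP orP) => [[H|/andP[bT H]]|[[] ab H]]; first by exists false.
- by exists true; rewrite ?bT.
- by case: b ab H => // _ H; right.
by left.
Qed.

Lemma compatible_refl Y b : relevant Y b -> compatible Y Y b.
Proof. by rewrite /relevant /compatible; case: b => /andP[-> _]; rewrite ?orbT. Qed.

Lemma relevant_false Y : q \notin Y -> relevant Y false = covers Y Y Rq && covers Y Y R14.
Proof. by move=> qY; rewrite /relevant qmodelE // active_ff coversU andbb andbT. Qed.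

Lemma relevant_true Y : q \notin Y ->
  relevant Y true = [&& covers Y Y Rq, covers Y Y R02 & ~~ covers Y Y R34].
Proof.
move=> qY; rewrite /relevant !qmodelE // active_tt active_ft !coversU.
by case: (covers Y Y Rq); case: (covers Y Y R0); case: (covers Y Y R2);
   case: (covers Y Y R3); case: (covers Y Y R4).
Qed.

Lemma compatible_false X Y : q \notin Y -> X \subset Y ->
  compatible X Y false = [&& covers Y Y Rq, covers Y Y R14, covers X Y Rq & covers X Y R14].
Proof.
move=> qY sXY; have qX : q \notin X by apply: contra qY; apply: (subsetP sXY).
by rewrite /compatible qmodelE // active_ff !coversU orbF -!andbA.
Qed.

Lemma compatible_true X Y : q \notin Y -> X \subset Y ->
  compatible X Y true = [&& covers Y Y Rq, covers Y Y R02, covers X Y Rq, covers X Y R2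
                          & covers X Y R34 || covers X Y R0].
Proof.
move=> qY sXY; have qX : q \notin X by apply: contra qY; apply: (subsetP sXY).
rewrite /compatible !qmodelE // active_tt active_ft !coversU.
by case: (covers Y Y Rq); case: (covers Y Y R0); case: (covers Y Y R2);
   case: (covers X Y Rq); case: (covers X Y R0); case: (covers X Y R2).
Qed.

Definition fSP_raw := [set x | (x \in Rq) || `[< new_rule P' q x >]].

Ltac new_rule_in := rewrite in_set; apply/orP; right; apply/asboolP.

Lemma fSP_raw_Rq r : r \in Rq -> r \in fSP_raw.
Proof. by move=> rQ; rewrite in_set rQ. Qed.

Lemma fSP_raw_1a r0 r4 : r0 \in R0 -> r4 \in R4 ->
  mkrule (Hd r0 :|: Hq q r4) (Bq q r0 :|: Blits r4) \in fSP_raw.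
Proof. by move=> *; new_rule_in; left; exists r0, r4. Qed.

Lemma fSP_raw_2a r0 r3 r' : r0 \in R0 -> r3 \in R3 -> r' \in R14 ->
  mkrule (Hd r0 :|: Hq q r3)
    (Bq q r0 :|: Bq q r3 :|: notS (posS (Hq q r')) :|: nnS (Bq q r')) \in fSP_raw.
Proof. by move=> *; new_rule_in; right; left; exists r0, r3, r'. Qed.

Lemma fSP_raw_3a r0 r3 h D : r0 \in R0 -> r3 \in R3 -> h \in Hd r0 -> Dq q (R02 :\ r0) D ->
  mkrule (Hd r0) (Bq q r0 :|: [set nn h] :|: D :|: Bq q r3 :|: notS (posS (Hq q r3)))
    \in fSP_raw.
Proof. by move=> *; new_rule_in; do 2 right; left; exists r0, r3, h, D. Qed.

Lemma fSP_raw_1b r2 r4 : r2 \in R2 -> r4 \in R4 ->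
  mkrule (Hd r2) (Bq q r2 :|: notS (posS (Hq q r4)) :|: nnS (Blits r4)) \in fSP_raw.
Proof. by move=> *; new_rule_in; do 3 right; left; exists r2, r4. Qed.

Lemma fSP_raw_2b r2 r3 r' : r2 \in R2 -> r3 \in R3 -> r' \in R14 ->
  mkrule (Hd r2) (Bq q r2 :|: notS (posS (Hq q r3 :|: Hq q r'))
                          :|: nnS (Bq q r3 :|: Bq q r')) \in fSP_raw.
Proof. by move=> *; new_rule_in; do 4 right; left; exists r2, r3, r'. Qed.

Lemma fSP_raw_3b r2 r3 h D : r2 \in R2 -> r3 \in R3 -> h \in Hd r2 -> Dq q (R02 :\ r2) D ->
  mkrule (Hd r2)
    (Bq q r2 :|: notS (posS (Hq q r3)) :|: nnS (Bq q r3 :|: [set pos h]) :|: D) \in fSP_raw.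
Proof. by move=> *; new_rule_in; do 5 right; left; exists r2, r3, h, D. Qed.

Lemma fSP_raw_4 r' D : r' \in R14 -> Dq q R34 D -> D :&: notS (Bq q r') = set0 ->
  mkrule (Hq q r') (Bq q r' :|: D) \in fSP_raw.
Proof. by move=> *; new_rule_in; do 6 right; left; exists r', D. Qed.

Lemma fSP_raw_6 r' r3 h D : r' \in R14 -> r3 \in R3 -> h \in Hq q r' -> Dq q (R14 :\ r') D ->
  mkrule (Hq q r')
    (Bq q r' :|: notS (posS (Hq q r3)) :|: nnS (Bq q r3 :|: [set pos h]) :|: D) \in fSP_raw.
Proof. by move=> *; new_rule_in; do 8 right; left; exists r', r3, h, D. Qed.

Lemma fSP_raw_7 r0 r3 r3' h D : r0 \in R0 -> r3 \in R3 -> r3' \in R3 -> r3 != r3' ->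
  Dq q (R02 :\ r0) D -> h \in Hd r0 ->
  mkrule (Hd r0 :|: Hq q r3)
    (Bq q r0 :|: Bq q r3 :|: notS (posS (Hq q r3')) :|: nnS (Bq q r3' :|: [set pos h]) :|: D)
    \in fSP_raw.
Proof. by move=> *; new_rule_in; do 9 right; exists r0, r3, r3', D, h. Qed.

Lemma ruleH_Rq X Y r : r \in Rq -> ruleH X Y r = covered q X Y r.
Proof.
rewrite inE => /andP[_]; rewrite /sig_rule !inE !negb_or => /andP[/andP[/andP[h p] m] n].
by rewrite /covered /qbody /qhead Bq_id ?Hq_id.
Qed.

Lemma covers_Rq X Y : (forall x, x \in fSP_raw -> ruleH X Y x) -> covers X Y Rq.
Proof. by move=> hF; apply/forall_inP => r rQ; rewrite -ruleH_Rq // hF ?fSP_raw_Rq. Qed.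

Lemma relevant_of_fSP_raw Y : q \notin Y -> (forall x, x \in fSP_raw -> ruleH Y Y x) ->
  exists b, relevant Y b.
Proof.
move=> qY hF; have cQ := covers_Rq hF.
case: (boolP (covers Y Y R14)) => c14; first by exists false; rewrite relevant_false // cQ.
exists true; rewrite relevant_true // cQ /=.
have /coversPn[r' H' /andP[b' nh']] := c14.
have nc34 : ~~ covers Y Y R34.
  apply/negP => /Dq_complete[D HD bD].
  have := hF _ (fSP_raw_4 H' HD (body_notS_disjoint bD b')).
  by rewrite (ruleH_4 HD) b' bD (negbTE nh').
rewrite nc34 andbT; have /coversPn[s Hs /andP[bs nhs]] := nc34.
apply/coversP => r Hr br; apply: contraT => nh; have hr := R02_Hd Hr.
case/setUP: Hr => Hr; case/setUP: Hs => Hs.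
- have := hF _ (fSP_raw_2a Hr Hs H').
  by rewrite ruleH_2a // br bs b' (negbTE nh') (negbTE nh) (negbTE nhs).
- have := hF _ (fSP_raw_1a Hr Hs).
  by rewrite ruleH_1a ?R4_Bq // br bs (negbTE nh) (negbTE nhs).
- have := hF _ (fSP_raw_2b Hr Hs H').
  by rewrite ruleH_2b // br bs b' nh' nhs (negbTE nh).
- have := hF _ (fSP_raw_1b Hr Hs).
  by rewrite ruleH_1b ?R4_Bq // br bs nhs (negbTE nh).
Qed.

Lemma compatible_false_of_fSP_raw X Y : q \notin Y -> X \subset Y ->
  (forall x, x \in fSP_raw -> ht_rule X Y x) -> relevant Y false -> compatible X Y false.
Proof.
move=> qY sXY hF; rewrite relevant_false // compatible_false // => /andP[cQ c14].
have hFX x : x \in fSP_raw -> ruleH X Y x by move/hF => /andP[].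
rewrite cQ c14 (covers_Rq hFX) /=.
apply/coversP => r Hr bXr; apply: contraT => nhX.
have bYr := qbody_there sXY bXr; have hYr : qhead Y r by move/coversP: c14; apply.
case: (boolP (covers Y Y R34)) => [/Dq_complete[D HD bD]|/coversPn[s Hs /andP[bs nhs]]].
  have := hFX _ (fSP_raw_4 Hr HD (body_notS_disjoint bD bYr)).
  by rewrite (ruleH_4 HD) bXr bD (negbTE nhX).
case/setUP: Hs => Hs; last first.
  have Hs' : s \in R14 by rewrite in_setU Hs orbT.
  by move/coversP: c14 => /(_ s Hs' bs); rewrite (negbTE nhs).
have [h hH hY] := qhead_pick hYr.
have [D HD bD] := Dq_complete (covers_sub (subD1set R14 r) c14).
have := hFX _ (fSP_raw_6 Hr Hs hH HD).
by rewrite (ruleH_6 HD) bXr nhs bs hY bD (negbTE nhX).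
Qed.

Lemma covers_R2_of_fSP_raw X Y s : X \subset Y -> (forall x, x \in fSP_raw -> ruleH X Y x) ->
  covers Y Y R02 -> s \in R34 -> qbody Y Y s -> ~~ qhead Y s -> covers X Y R2.
Proof.
move=> sXY hFX c02 Hs bs nhs; apply/coversP => r Hr bXr; apply: contraT => nhX.
have Hr' : r \in R02 by rewrite in_setU Hr orbT.
have hr := R02_Hd Hr'.
have [h hH hY] : exists2 h, h \in Hq q r & h \in Y.
  by apply: qhead_pick; move/coversP: c02; apply => //; apply: qbody_there sXY bXr.
case/setUP: Hs => Hs.
- have [D HD bD] := Dq_complete (covers_sub (subD1set R02 r) c02).
  rewrite (Hq_id hr) in hH; have := hFX _ (fSP_raw_3b Hr Hs hH HD).
  by rewrite (ruleH_3b hr HD) bXr nhs bs hY bD (negbTE nhX).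
- have := hFX _ (fSP_raw_1b Hr Hs).
  by rewrite ruleH_1b ?R4_Bq // bXr nhs bs (negbTE nhX).
Qed.

Lemma covers_R34_of_fSP_raw X Y s r0 : X \subset Y ->
  (forall x, x \in fSP_raw -> ruleH X Y x) ->
  covers Y Y R02 -> s \in R34 -> qbody Y Y s -> ~~ qhead Y s ->
  r0 \in R0 -> qbody X Y r0 -> ~~ qhead X r0 -> covers X Y R34.
Proof.
move=> sXY hFX c02 Hs bs nhs H0 bX0 nhX0; have h0 := R0_Hd H0.
apply/coversP => r Hr bXr; apply: contraT => nhX.
case/setUP: Hr => Hr; last first.
  have := hFX _ (fSP_raw_1a H0 Hr).
  by rewrite ruleH_1a ?R4_Bq // bX0 bXr (negbTE nhX0) (negbTE nhX).
case/setUP: Hs => Hs; last first.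
  have Hs' : s \in R14 by rewrite in_setU Hs orbT.
  have := hFX _ (fSP_raw_2a H0 Hr Hs').
  by rewrite ruleH_2a // bX0 bXr nhs bs (negbTE nhX0) (negbTE nhX).
have [h hH hY] : exists2 h, h \in Hq q r0 & h \in Y.
  apply: qhead_pick; move/coversP: c02; apply; first by rewrite in_setU H0.
  exact: qbody_there sXY bX0.
rewrite (Hq_id h0) in hH.
have [D HD bD] := Dq_complete (covers_sub (subD1set R02 r0) c02).
case: (eqVneq r s) => [Ers|nrs].
  have := hFX _ (fSP_raw_3a H0 Hr hH HD).
  by rewrite (ruleH_3a h0 HD) bX0 hY bD bXr Ers nhs (negbTE nhX0).
have := hFX _ (fSP_raw_7 H0 Hr Hs nrs HD hH).
by rewrite (ruleH_7 h0 HD) bX0 bXr nhs bs hY bD (negbTE nhX0) (negbTE nhX).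
Qed.

Lemma compatible_true_of_fSP_raw X Y : q \notin Y -> X \subset Y ->
  (forall x, x \in fSP_raw -> ht_rule X Y x) -> relevant Y true -> compatible X Y true.
Proof.
move=> qY sXY hF; rewrite relevant_true // compatible_true //.
case/and3P=> cQ c02 /coversPn[s Hs /andP[bs nhs]].
have hFX x : x \in fSP_raw -> ruleH X Y x by move/hF => /andP[].
rewrite cQ c02 (covers_Rq hFX) (covers_R2_of_fSP_raw sXY hFX c02 Hs bs nhs) /=.
case: (boolP (covers X Y R0)) => [c0|/coversPn[r0 H0 /andP[bX0 nhX0]]].
  by apply/orP; right.
by rewrite (covers_R34_of_fSP_raw sXY hFX c02 Hs bs nhs H0 bX0 nhX0).
Qed.

Section Soundness.
Variables (X Y : {set A}) (b : bool).
Hypotheses (qY : q \notin Y) (sXY : X \subset Y) (relY : relevant Y b).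
Hypothesis least : forall b', relevant Y b' -> compatible X Y b'.

Lemma covers_Rq_there : covers Y Y Rq.
Proof. by move: relY; case: b; rewrite ?relevant_true ?relevant_false // => /andP[]. Qed.

Lemma covers_here_false : relevant Y false -> covers X Y R14.
Proof. by move/least; rewrite compatible_false // => /and4P[]. Qed.

Lemma covers_here_true : relevant Y true -> covers X Y R2 && (covers X Y R34 || covers X Y R0).
Proof. by move/least; rewrite compatible_true // => /and5P[_ _ _ -> ->]. Qed.

Lemma relevant_trueI r : covers Y Y R02 -> r \in R34 -> qbody Y Y r -> ~~ qhead Y r ->
  relevant Y true.
Proof.
move=> c02 Hr br nhr; rewrite relevant_true // covers_Rq_there c02 /=.
by apply/coversPn; exists r; rewrite ?br.
Qed.

Lemma head_here_true r r' : relevant Y true -> r \in R02 -> r' \in R2 :|: R34 ->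
  qbody X Y r -> qbody X Y r' -> qhead X r || qhead X r'.
Proof.
move=> /covers_here_true /andP[c2 c34_0] Hr Hr' br br'.
case/setUP: Hr' => [Hr2|Hr34]; first by move/coversP: c2 => /(_ r' Hr2 br') ->; rewrite orbT.
case/orP: c34_0 => [/coversP/(_ r' Hr34 br') -> | c0]; first by rewrite orbT.
by case/setUP: Hr => Hr; [move/coversP: c0 | move/coversP: c2] => /(_ r Hr br) ->.
Qed.

Lemma covers_Rq_here : covers X Y Rq.
Proof.
by move: (least relY); case: b relY => _;
  [rewrite compatible_true // => /and5P[_ _ ->] | rewrite compatible_false // => /and4P[_ _ ->]].
Qed.

Lemma head_there_false r : relevant Y false -> r \in R14 -> qbody Y Y r -> qhead Y r.
Proof. by rewrite relevant_false // => /andP[_ /coversP]; apply. Qed.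

Lemma head_there_true r : relevant Y true -> r \in R02 -> qbody Y Y r -> qhead Y r.
Proof. by rewrite relevant_true // => /and3P[_ /coversP + _]; apply. Qed.

Lemma head_here_false r : relevant Y false -> r \in R14 -> qbody X Y r -> qhead X r.
Proof. by move/covers_here_false/coversP; apply. Qed.

Lemma sound_Rq x : x \in Rq -> ruleH X Y x.
Proof. by move=> Hx; rewrite ruleH_Rq //; move/coversP: covers_Rq_here => /(_ x Hx) /implyP. Qed.

Lemma sound_1a r0 r4 : r0 \in R0 -> r4 \in R4 ->
  ruleH X Y (mkrule (Hd r0 :|: Hq q r4) (Bq q r0 :|: Blits r4)).
Proof.
move=> H0 H4; rewrite ruleH_1a ?R0_Hd ?R4_Bq //; apply/implyP => /andP[b0 b4].
move: relY; case: b => relY'; first by apply: head_here_true; rewrite // !in_setU ?H0 ?H4 ?orbT.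
have H4' : r4 \in R14 by rewrite in_setU H4 orbT.
by rewrite (head_here_false relY' H4' b4) orbT.
Qed.

Lemma sound_2a r0 r3 r' : r0 \in R0 -> r3 \in R3 -> r' \in R14 ->
  ruleH X Y (mkrule (Hd r0 :|: Hq q r3)
    (Bq q r0 :|: Bq q r3 :|: notS (posS (Hq q r')) :|: nnS (Bq q r'))).
Proof.
move=> H0 H3 H'; rewrite ruleH_2a ?R0_Hd //; apply/implyP => /and4P[b0 b3 nh' b'].
move: relY; case: b => relY'; first by apply: head_here_true; rewrite // !in_setU ?H0 ?H3 ?orbT.
by rewrite (head_there_false relY' H' b') in nh'.
Qed.

Lemma sound_3a r0 r3 h D : r0 \in R0 -> r3 \in R3 -> h \in Hd r0 -> Dq q (R02 :\ r0) D ->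
  ruleH X Y (mkrule (Hd r0)
    (Bq q r0 :|: [set nn h] :|: D :|: Bq q r3 :|: notS (posS (Hq q r3)))).
Proof.
move=> H0 H3 hH HD; have h0 := R0_Hd H0; rewrite -(Hq_id h0) in hH.
rewrite (ruleH_3a h0 HD); apply/implyP => /and5P[b0 hY bD b3 nh3].
have c02 := covers_D1 (Dq_sound HD bD) (qheadP hH hY).
have H3' : r3 \in R34 by rewrite in_setU H3.
have relT := relevant_trueI c02 H3' (qbody_there sXY b3) nh3.
have H0' : r0 \in R02 by rewrite in_setU H0.
have H3'' : r3 \in R2 :|: R34 by rewrite !in_setU H3 orbT.
case/orP: (head_here_true relT H0' H3'' b0 b3) => // /(qhead_mono sXY).
by rewrite (negbTE nh3).
Qed.

Lemma sound_1b r2 r4 : r2 \in R2 -> r4 \in R4 ->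
  ruleH X Y (mkrule (Hd r2) (Bq q r2 :|: notS (posS (Hq q r4)) :|: nnS (Blits r4))).
Proof.
move=> H2 H4; rewrite ruleH_1b ?R2_Hd ?R4_Bq //; apply/implyP => /and3P[b2 nh4 b4].
move: relY; case: b => relY'.
  by move/covers_here_true/andP: relY' => [/coversP c2 _]; apply: c2.
have H4' : r4 \in R14 by rewrite in_setU H4 orbT.
by rewrite (head_there_false relY' H4' b4) in nh4.
Qed.

Lemma sound_2b r2 r3 r' : r2 \in R2 -> r3 \in R3 -> r' \in R14 ->
  ruleH X Y (mkrule (Hd r2) (Bq q r2 :|: notS (posS (Hq q r3 :|: Hq q r'))
                                     :|: nnS (Bq q r3 :|: Bq q r'))).
Proof.
move=> H2 H3 H'; rewrite ruleH_2b ?R2_Hd //; apply/implyP => /and5P[b2 nh3 nh' b3 b'].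
move: relY; case: b => relY'.
  by move/covers_here_true/andP: relY' => [/coversP c2 _]; apply: c2.
by rewrite (head_there_false relY' H' b') in nh'.
Qed.

Lemma sound_3b r2 r3 h D : r2 \in R2 -> r3 \in R3 -> h \in Hd r2 -> Dq q (R02 :\ r2) D ->
  ruleH X Y (mkrule (Hd r2)
    (Bq q r2 :|: notS (posS (Hq q r3)) :|: nnS (Bq q r3 :|: [set pos h]) :|: D)).
Proof.
move=> H2 H3 hH HD; have h2 := R2_Hd H2; rewrite -(Hq_id h2) in hH.
rewrite (ruleH_3b h2 HD); apply/implyP => /and5P[b2 nh3 b3 hY bD].
have c02 := covers_D1 (Dq_sound HD bD) (qheadP hH hY).
have H3' : r3 \in R34 by rewrite in_setU H3.
move/covers_here_true/andP: (relevant_trueI c02 H3' b3 nh3) => [/coversP c2 _].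
exact: c2.
Qed.

Lemma sound_4 r' D : r' \in R14 -> Dq q R34 D -> ruleH X Y (mkrule (Hq q r') (Bq q r' :|: D)).
Proof.
move=> H' HD; rewrite (ruleH_4 HD); apply/implyP => /andP[b' bD].
move: relY; case: b => relY'; last exact: head_here_false relY' H' b'.
by move: relY'; rewrite relevant_true // (Dq_sound HD bD) !andbF.
Qed.

Lemma sound_5 r' r3 r D : r' \in R14 -> r \in R02 -> Dq q R4 D ->
  ruleH X Y (mkrule (Hq q r') (Bq q r' :|: notS (posS (Hd r :|: Hq q r3))
                                       :|: nnS (Bq q r :|: Bq q r3) :|: D)).
Proof.
move=> H' Hr HD; rewrite (ruleH_5 (R02_Hd Hr) HD).
apply/implyP => /and5P[b' nhr _ br _].
move: relY; case: b => relY'; last exact: head_here_false relY' H' b'.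
by rewrite (head_there_true relY' Hr br) in nhr.
Qed.

Lemma sound_6 r' r3 h D : r' \in R14 -> h \in Hq q r' -> Dq q (R14 :\ r') D ->
  ruleH X Y (mkrule (Hq q r')
    (Bq q r' :|: notS (posS (Hq q r3)) :|: nnS (Bq q r3 :|: [set pos h]) :|: D)).
Proof.
move=> H' hH HD; rewrite (ruleH_6 HD); apply/implyP => /and5P[b' _ _ hY bD].
have c14 := covers_D1 (Dq_sound HD bD) (qheadP hH hY).
have relF : relevant Y false by rewrite relevant_false // covers_Rq_there.
exact: head_here_false relF H' b'.
Qed.

Lemma sound_7 r0 r3 r3' h D : r0 \in R0 -> r3 \in R3 -> r3' \in R3 ->
  Dq q (R02 :\ r0) D -> h \in Hd r0 ->
  ruleH X Y (mkrule (Hd r0 :|: Hq q r3)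
    (Bq q r0 :|: Bq q r3 :|: notS (posS (Hq q r3')) :|: nnS (Bq q r3' :|: [set pos h]) :|: D)).
Proof.
move=> H0 H3 H3' HD hH; have h0 := R0_Hd H0; rewrite -(Hq_id h0) in hH.
rewrite (ruleH_7 h0 HD); apply/implyP => /and5P[b0 b3 nh3' b3' /andP[hY bD]].
have c02 := covers_D1 (Dq_sound HD bD) (qheadP hH hY).
have H3'' : r3' \in R34 by rewrite in_setU H3'.
apply: head_here_true (relevant_trueI c02 H3'' b3' nh3') _ _ b0 b3.
  by rewrite in_setU H0.
by rewrite !in_setU H3 orbT.
Qed.

Lemma sound_fSP_raw x : x \in fSP_raw -> ruleH X Y x.
Proof.
rewrite in_set => /orP[|/asboolP]; first exact: sound_Rq.
case=> [[r0 [r4 [H0 H4 ->]]]|]; first exact: sound_1a.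
case=> [[r0 [r3 [r' [H0 H3 H' ->]]]]|]; first exact: sound_2a.
case=> [[r0 [r3 [h [D [H0 H3 hH HD ->]]]]]|]; first exact: sound_3a.
case=> [[r2 [r4 [H2 H4 ->]]]|]; first exact: sound_1b.
case=> [[r2 [r3 [r' [H2 H3 H' ->]]]]|]; first exact: sound_2b.
case=> [[r2 [r3 [h [D [H2 H3 hH HD ->]]]]]|]; first exact: sound_3b.
case=> [[r' [D [H' HD _ ->]]]|]; first exact: sound_4.
case=> [[r' [r3 [r [D [H' _ Hr [HD _] ->]]]]]|]; first exact: sound_5.
case=> [[r' [r3 [h [D [H' _ hH HD ->]]]]]|]; first exact: sound_6.
by case=> [r0 [r3 [r3' [D [h [H0 H3 H3' _ [HD hH ->]]]]]]]; apply: sound_7.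
Qed.

End Soundness.

Lemma htmod_fSP_raw X Y : q \notin Y ->
  htmod fSP_raw X Y =
  [&& X \subset Y, [exists b, relevant Y b] & [forall b, relevant Y b ==> compatible X Y b]].
Proof.
move=> qY; rewrite /htmod; case sXY: (X \subset Y) => //=.
apply/forall_inP/andP => [hF|[/existsP[b relb] /forallP least] x Hx].
  split; first by apply/existsP; apply: relevant_of_fSP_raw => // x /hF /andP[].
  apply/forallP => -[]; apply/implyP.
    exact: compatible_true_of_fSP_raw.
  exact: compatible_false_of_fSP_raw.
have leastX b' : relevant Y b' -> compatible X Y b' by move/(implyP (least b')).
rewrite /ht_rule (sound_fSP_raw qY sXY relb leastX Hx) andbT.
by apply: (sound_fSP_raw qY (subxx Y) relb) => // b' /compatible_refl.
Qed.

Ltac qf := rewrite ?(qfreeU, qfree_notS, qfree_nnS, qfree_posS, qfree1, qfree_Bq, in_setU,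
  mem_Hq_q, orbF) /=.

Lemma qfree_fSP_raw x : x \in fSP_raw -> q \notin sig_rule x.
Proof.
have neq_q r h : q \notin Hd r -> h \in Hd r -> h != q by move=> qH hH; apply: contraNneq qH => <-.
rewrite in_set => /orP[|/asboolP]; first by rewrite in_set => /andP[].
case=> [[r0 [r4 [/R0_Hd h0 /R4_Bq b4 ->]]]|].
  by apply: sig_mkrule; rewrite -?b4; qf; rewrite ?h0.
case=> [[r0 [r3 [r' [/R0_Hd h0 _ _ ->]]]]|].
  by apply: sig_mkrule; qf; rewrite ?h0.
case=> [[r0 [r3 [h [D [/R0_Hd h0 _ /(neq_q _ _ h0) hq HD ->]]]]]|].
  by apply: sig_mkrule; qf; rewrite ?h0 ?hq ?(qfree_Dq HD).
case=> [[r2 [r4 [/R2_Hd h2 /R4_Bq b4 ->]]]|].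
  by apply: sig_mkrule; rewrite -?b4; qf; rewrite ?h2.
case=> [[r2 [r3 [r' [/R2_Hd h2 _ _ ->]]]]|].
  by apply: sig_mkrule; qf; rewrite ?h2.
case=> [[r2 [r3 [h [D [/R2_Hd h2 _ /(neq_q _ _ h2) hq HD ->]]]]]|].
  by apply: sig_mkrule; qf; rewrite ?h2 ?hq ?(qfree_Dq HD).
case=> [[r' [D [_ HD _ ->]]]|].
  by apply: sig_mkrule; qf; rewrite ?(qfree_Dq HD).
case=> [[r' [r3 [r [D [_ _ /R02_Hd hr [HD _] ->]]]]]|].
  by apply: sig_mkrule; qf; rewrite ?hr ?(qfree_Dq HD).
case=> [[r' [r3 [h [D [_ _ hH HD ->]]]]]|].
  have hq : h != q by move: hH; rewrite in_setD1 => /andP[].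
  by apply: sig_mkrule; qf; rewrite ?hq ?(qfree_Dq HD).
case=> [r0 [r3 [r3' [D [h [/R0_Hd h0 _ _ _ [HD /(neq_q _ _ h0) hq ->]]]]]]].
by apply: sig_mkrule; qf; rewrite ?h0 ?hq ?(qfree_Dq HD).
Qed.

End Forgetting.

(** * Criterion Omega *)

Section Omega.
Variables (A : finType) (P : program A) (q : A).
Implicit Types (X Y Z W : {set A}).

Local Notation S := (sig_prog P).
Local Notation withq := (withq q).
Local Notation qmodel := (qmodel (NF P) q).
Local Notation relevant := (relevant (NF P) q).
Local Notation compatible := (compatible (NF P) q).

Definition qset (b : bool) : {set A} := if b then [set q] else set0.

Lemma htmod_withq X Y (a b : bool) :
  htmod P (withq X a) (withq Y b) = (withq X a \subset withq Y b) && qmodel X Y a b.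
Proof. by rewrite -htmod_NF. Qed.

Lemma htmod_setI_sig W Z : W \subset Z -> htmod P W Z = htmod P (W :&: S) (Z :&: S).
Proof. by move=> sWZ; rewrite (htmod_restr _ _ (subxx S)) sWZ. Qed.

Lemma withq_setI_sig Z (b : bool) : (b -> q \in S) -> withq Z b :&: S = Z :&: S :|: qset b.
Proof.
move=> qS; apply/setP => a; rewrite /withq /qset; case: b qS => qS; rewrite !inE ?orbF //.
by case: eqP => [->|_] /=; rewrite ?orbF // (qS isT) orbT.
Qed.

Lemma setU1I_notin Z : q \notin S -> (q |: Z) :&: S = Z :&: S.
Proof.
by move=> qS; apply/setP => a; rewrite !inE; case: eqP => // ->; rewrite (negbTE qS) !andbF.
Qed.

(* If [q] does not occur in [P], [<Y, Y + q>] is a model as soon as [<Y + q, Y + q>] is. *)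
Lemma relevant_sig Y (b : bool) : q \notin Y -> relevant Y b -> b -> q \in S.
Proof.
case: b => // qY /andP[M NS] _; apply: contraNT NS => qS; apply/negPn.
have H1 : htmod P (withq Y true) (withq Y true) by rewrite htmod_withq subxx M.
have : htmod P (withq Y false) (withq Y true).
  rewrite htmod_setI_sig ?subsetUr //= setU1I_notin //.
  by move: H1; rewrite htmod_setI_sig //= setU1I_notin.
by rewrite htmod_withq => /andP[_ ->].
Qed.

Lemma relevant_Rel Y (b : bool) : q \notin Y -> relevant Y b -> qset b \in Rel P [set q] (Y :&: S).
Proof.
move=> qY relb; have qS := relevant_sig qY relb; move: (relb) => /andP[M NS].
have E : Y :&: S :|: qset b = withq Y b :&: S by rewrite withq_setI_sig.
rewrite inE; apply/and3P; split.
- by case: (b); rewrite ?sub0set.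
- by rewrite htE E subsetIr andbT -htmod_setI_sig // htmod_withq subxx.
apply/forallP => A2; apply/implyP; case: b relb qS M NS E => //= relb qS M NS E.
  rewrite properEneq subset1 => /andP[nA2 /orP[/eqP E2|/eqP ->]]; first by rewrite E2 eqxx in nA2.
  rewrite setU0 E htE negb_and; apply/orP; left.
  rewrite -htmod_setI_sig ?subsetUr //.
  by have := htmod_withq Y Y false true; rewrite /= (negbTE NS) andbF => ->.
by rewrite properEneq subset0 => /andP[/negP].
Qed.

Lemma Rel_relevant Y A0 : q \notin Y -> A0 \in Rel P [set q] (Y :&: S) ->
  relevant Y (q \in A0) /\ A0 = qset (q \in A0).
Proof.
move=> qY; rewrite inE => /and3P[+ htA /forallP minA].
rewrite subset1 => /orP[/eqP EA|/eqP EA]; rewrite {}EA ?set11 ?inE /= in htA minA *; last first.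
  split => //; rewrite /relevant andbT.
  move: htA; rewrite setU0 htE => /andP[h _].
  have : htmod P (withq Y false) (withq Y false) by rewrite htmod_setI_sig.
  by rewrite htmod_withq => /andP[].
split => //; move: htA; rewrite htE => /andP[h sS].
have qS : q \in S by apply: (subsetP sS); rewrite !inE eqxx orbT.
have E : Y :&: S :|: [set q] = withq Y true :&: S by rewrite withq_setI_sig.
apply/andP; split.
  have : htmod P (withq Y true) (withq Y true) by rewrite htmod_setI_sig // -E.
  by rewrite htmod_withq => /andP[].
apply/negP => H.
have := minA set0; rewrite proper0 (_ : [set q] != set0) /=; last first.
  by apply/set0Pn; exists q; rewrite set11.
rewrite setU0 htE sS andbT E => /negP; apply.
have : htmod P (withq Y false) (withq Y true) by rewrite htmod_withq H /= subsetUr.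
by rewrite htmod_setI_sig //= subsetUr.
Qed.

Lemma compatible_RYA X Y (b : bool) : q \notin Y -> relevant Y b -> X \subset Y ->
  compatible X Y b -> X :&: S \in RYA P [set q] (Y :&: S) (qset b).
Proof.
move=> qY relb sXY /compatibleP[a ab H]; have qS := relevant_sig qY relb.
have qX : q \notin X by apply: contra qY; apply: (subsetP sXY).
apply/imsetP; exists (withq X a :&: S).
  rewrite inE htE -withq_setI_sig // subsetIr andbT -htmod_setI_sig ?withq_sub //.
  by rewrite htmod_withq H withq_sub.
apply/setP => x; rewrite /withq; case: (a) {ab H}; rewrite !inE;
  by case: eqP => [->|]; rewrite ?(negbTE qX) ?andbF.
Qed.

Lemma RYA_compatible X Y (b : bool) : q \notin Y -> relevant Y b -> X \subset Y ->
  X :&: S \in RYA P [set q] (Y :&: S) (qset b) -> compatible X Y b.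
Proof.
move=> qY relb sXY; have qS := relevant_sig qY relb.
have qX : q \notin X by apply: contra qY; apply: (subsetP sXY).
case/imsetP => X1; rewrite inE htE => /andP[hX1 sS] EX.
have sX1 : X1 \subset Y :&: S :|: qset b by case/andP: hX1.
have ab : (q \in X1) ==> b.
  apply/implyP => /(subsetP sX1); rewrite !inE (negbTE qY) /= /qset.
  by case: (b); rewrite ?inE.
have EX1 : X1 = withq X (q \in X1) :&: S.
  apply/setP => x; case: (eqVneq x q) => [->|nx].
    rewrite /withq; case qX1: (q \in X1); rewrite !inE ?eqxx ?(negbTE qX) //=.
    by rewrite (subsetP (subset_trans sX1 sS) q qX1).
  rewrite inE mem_withq //.
  have : x \in X :&: S = (x \in X1 :\: [set q]) by rewrite EX.
  by rewrite !inE nx /= => ->.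
have : htmod P (withq X (q \in X1)) (withq Y b).
  by rewrite htmod_setI_sig ?withq_sub // -EX1 withq_setI_sig.
by rewrite htmod_withq => /andP[_ H]; apply/compatibleP; exists (q \in X1).
Qed.

Lemma least_relevant Y : ~ Omega P [set q] -> q \notin Y -> (exists b, relevant Y b) ->
  exists2 b0, relevant Y b0 &
    forall X b, X \subset Y -> compatible X Y b0 -> relevant Y b -> compatible X Y b.
Proof.
move=> nO qY [b relb].
have [L [HL Lmin]] : exists L, L \in calR P [set q] (Y :&: S) /\
    forall R', R' \in calR P [set q] (Y :&: S) -> L \subset R'.
  apply: contrapT => noL; apply: nO; exists (Y :&: S); split; last split => //.
    by apply/subsetP => x; rewrite !inE => /andP[xY _]; apply: contraNneq qY => <-.
  by apply/set0Pn; exists (RYA P [set q] (Y :&: S) (qset b)); apply/imset_f/relevant_Rel.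
case/imsetP: HL => A0 HA0 EL; have [relA0 EA0] := Rel_relevant qY HA0.
exists (q \in A0) => // X b' sXY compX relb'.
apply: (RYA_compatible qY relb' sXY); apply: (subsetP (Lmin _ _)).
  by apply/imset_f/relevant_Rel.
by rewrite EL EA0; apply: compatible_RYA.
Qed.

End Omega.

(** * Answer sets *)

Section AnswerSets.
Variables (A : finType) (P : program A) (q : A).
Implicit Types (X Y Z : {set A}) (R : program A).

Local Notation withq := (withq q).
Local Notation qmodel := (qmodel (NF P) q).
Local Notation relevant := (relevant (NF P) q).
Local Notation compatible := (compatible (NF P) q).

Lemma fSPE : fSP P q = NF (fSP_raw (NF P) q).
Proof. by []. Qed.

Lemma q_notin_sig_fSP : q \notin sig_prog (fSP P q).
Proof.
apply/bigcupP => -[r /sig_NF[r0 H0 /subsetP s0]]; apply/negP.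
by apply: contra (qfree_fSP_raw (@NF_normal _ P) H0); apply: s0.
Qed.

Lemma htmod_qfree R X Y : q \notin sig_prog R ->
  htmod R X Y = (X \subset Y) && htmod R (X :\ q) (Y :\ q).
Proof.
move=> qR; have sR : sig_prog R \subset ~: [set q].
  by apply/subsetP => a aR; rewrite !inE; apply: contraNneq qR => <-.
by rewrite (htmod_restr _ _ sR) -!setDE.
Qed.

Lemma htmodU_withq R X Y (a b : bool) : q \notin sig_prog R -> q \notin X -> q \notin Y ->
  htmod (P :|: R) (withq X a) (withq Y b) =
  [&& withq X a \subset withq Y b, qmodel X Y a b & htmod R X Y].
Proof.
move=> qR qX qY; rewrite htmodU htmod_withq (htmod_qfree _ _ qR) !withqK //.
by case: (withq X a \subset withq Y b).
Qed.

Lemma htmodU_fSP R X Y : q \notin sig_prog R -> q \notin Y ->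
  htmod (fSP P q :|: R) X Y = [&& X \subset Y, [exists b, relevant Y b],
    [forall b, relevant Y b ==> compatible X Y b] & htmod R X Y].
Proof.
move=> qR qY; rewrite htmodU fSPE htmod_NF (htmod_fSP_raw (@NF_normal _ P)) //.
rewrite /htmod; case: (X \subset Y) => //=.
by rewrite -!andbA.
Qed.

Lemma AS_fSPU_of_AS R Y : q \notin sig_prog R ->
  Y \in AS (P :|: R) -> Y :\ q \in AS (fSP P q :|: R).
Proof.
move=> qR; set W := Y :\ q; set b := q \in Y.
have qW : q \notin W by rewrite setD11.
have EY : Y = withq W b := withq_D1 q Y.
rewrite !in_AS => /andP[hY /forallP minY].
move: (hY); rewrite EY htmodU_withq // subxx /= => /andP[Mb hRW].
have relb : relevant W b.
  rewrite /relevant Mb /=; apply/implyP => bT; apply/negP => M.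
  have := minY W; rewrite properD1 //= => /negP; apply.
  by rewrite EY bT (htmodU_withq false true) // M hRW subsetUr.
rewrite htmodU_fSP // subxx hRW andbT /=; apply/andP; split.
  apply/andP; split; first by apply/existsP; exists b.
  by apply/forallP => b'; apply/implyP => /compatible_refl.
apply/forallP => X; apply/implyP => pXW; rewrite htmodU_fSP //.
apply/negP => /and4P[sXW _ /forallP compX hRX].
have /compatibleP[a ab M] := implyP (compX b) relb.
have qX : q \notin X by apply: contra qW; apply: (subsetP sXW).
have sXY : withq X a \subset Y by rewrite EY withq_sub.
have := minY (withq X a); rewrite EY htmodU_withq // -EY sXY M hRX implybF => /negP; apply.
rewrite properEneq sXY andbT; apply: contraTneq pXW => EXY.
by rewrite properEneq -(withqK a qX) EXY eqxx.
Qed.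

Lemma q_notin_AS_fSPU R Y : q \notin sig_prog R -> Y \in AS (fSP P q :|: R) -> q \notin Y.
Proof.
move=> qR; rewrite in_AS => /andP[hY minY].
apply: contra (subsetP (minimal_htmod_sig hY minY) q) _.
by rewrite /sig_prog bigcup_setU in_setU negb_or q_notin_sig_fSP.
Qed.

Lemma AS_of_AS_fSPU R Y : ~ Omega P [set q] -> q \notin sig_prog R ->
  Y \in AS (fSP P q :|: R) -> exists b, withq Y b \in AS (P :|: R).
Proof.
move=> nO qR HY; have qY := q_notin_AS_fSPU qR HY.
move: HY; rewrite in_AS htmodU_fSP // subxx /= => /andP[/and3P[/existsP exb _ hRY] /forallP minY].
have [b0 rel0 least] := least_relevant nO qY exb.
exists b0; rewrite in_AS htmodU_withq // subxx hRY andbT; move: (rel0) => /andP[-> _] /=.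
apply/forallP => Z; apply/implyP => pZ; apply/negP.
set X := Z :\ q; set a := q \in Z; have qX : q \notin X by rewrite setD11.
rewrite (withq_D1 q Z) -/X -/a htmodU_withq // => /and3P[sZ M hRX].
have sXY : X \subset Y by rewrite -(withqK b0 qY) -(withqK a qX) setSD.
have ab : a ==> b0 by apply/implyP => aT; have := subsetP sZ q; rewrite !q_withq // aT; apply.
have compX : compatible X Y b0 by apply/compatibleP; exists a.
case: (eqVneq X Y) => [EXY|nXY].
  have nab : a != b0.
    by apply: contraTneq pZ => Eab; rewrite (withq_D1 q Z) -/X -/a EXY Eab properE subxx.
  move: rel0 M; rewrite EXY; case: (b0) ab nab; case: (a) => //= _ _ /andP[_ /negP]; apply.
have := minY X; rewrite properEneq nXY sXY htmodU_fSP // sXY hRX => /negP; apply.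
rewrite /= andbT; apply/andP; split; first exact/existsP.
by apply/forallP => b; apply/implyP; exact: least sXY compX.
Qed.

End AnswerSets.

Theorem theorem2 (A : finType) (P : {set rule A}) (q : A) :
  ~ Omega P [set q] ->
  forall R : {set rule A}, q \notin sig_prog R ->
    AS (fSP P q :|: R) = [set Y :\ q | Y in AS (P :|: R)].
Proof.
move=> nO R qR; apply/setP => Y; apply/idP/imsetP => [HY|[Y' HY' ->]].
  have [b Hb] := AS_of_AS_fSPU nO qR HY.
  by exists (withq q Y b); rewrite ?withqK ?(q_notin_AS_fSPU qR HY).
exact: AS_fSPU_of_AS.
Qed.
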